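(* If $C=p_r\dots p_s$ is a configuration of g-2PATH of Type II having free left hand and $-r\ge s$, then $\mathrm{mft}_{\text{g-2PATH}}(C)=-2r+s$.
   Context: Positions are elements of $\mathbb{Z}^2$; with $\epsilon_0=(1,0),\epsilon_1=(0,1),\epsilon_2=(-1,0),\epsilon_3=(0,-1)$, positions $p,p'$ are adjacent if $p'-p$ is some $\epsilon_i$. A configuration of g-2PATH is a sequence $C=p_r\dots p_s$ ($r\le0\le s$) of positions with $p_0=(0,0)$ (the general), consecutive positions adjacent, all positions distinct, and $p_l,p_m$ not adjacent whenever $|l-m|\ge2$. For $p\in C$, $\mathrm{bc}_C(p)=(b_0,\dots,b_3)$ with $b_i=1$ iff $p+\epsilon_i\in C$. Firing squad model (boundary-sensitive): a finite automaton $A$ has a finite state set with quiescent state $\mathrm{Q}$, general states $\mathrm{G}_0,\dots,\mathrm{G}_{m-1}$, firing states $\mathcal F\not\ni\mathrm{Q}$, a map $\tau:\{0,1\}^4\to\{0,\dots,m-1\}$ and a transition function from the current state and the four neighbour states ($\#$ where no node), with $\mathrm{Q}$ stable when all inputs are in $\{\mathrm{Q},\#\}$. On $C$, at time $0$ node $(0,0)$ is in $\mathrm{G}_{\tau(\mathrm{bc}_C((0,0)))}$, others in $\mathrm{Q}$, synchronous updates. $A$ is a solution of g-2PATH if for every configuration $C$ there is $t_C$ with no node in $\mathcal F$ before $t_C$ and all nodes in $\mathcal F$ at $t_C=:\mathrm{ft}(C,A)$. $\mathrm{mft}_{\text{g-2PATH}}(C)=\min_A\mathrm{ft}(C,A)$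 over solutions. For $r\le i\le0\le j\le s$, $W(i,j)$ is the set of pairs $(x_0,x_1)$ of finite, possibly empty, sequences of positions such that $x_0p_i\dots p_jx_1$ is a configuration $C'$ of g-2PATH (general at $p_0$) with $\mathrm{bc}_{C'}(p_l)=\mathrm{bc}_C(p_l)$ for $i\le l\le j$; $f(i,j)=\sup\{|x_0|:(x_0,x_1)\in W(i,j)\}$, $g(i,j)=\sup\{|x_1|:(x_0,x_1)\in W(i,j)\}$ (possibly $\infty$). The left hand of $C$ is free if $r=0$ or ($r<0$ and $f(r+1,s)=\infty$), and closed otherwise; the right hand is free if $s=0$ or ($s>0$ and $g(r,s-1)=\infty$), and closed otherwise. $C$ is of Type II if exactly one of its hands is free. *)

From Stdlib Require Import ZArith List Arith Lia.
Import ListNotations.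
Open Scope Z_scope.

Definition pos := (Z * Z)%type.

Definition padd (p q : pos) : pos := (fst p + fst q, snd p + snd q).

Definition eps (i : nat) : pos :=
  match i with
  | 0%nat => (1, 0)
  | 1%nat => (0, 1)
  | 2%nat => (-1, 0)
  | _ => (0, -1)
  end.

Definition adj (p p' : pos) : Prop := exists i, (i < 4)%nat /\ p' = padd p (eps i).

Definition origin : pos := (0, 0).

(* A configuration C = p_r ... p_s of g-2PATH is represented by the list
   L = [p_r; ...; p_s] together with k = -r, so that p_l = nth (l + k) L,
   r = -k and s = length L - 1 - k. *)
Definition is_config (k : nat) (L : list pos) : Prop :=
  (k < length L)%nat /\
  nth k L origin = origin /\
  (forall i, (S i < length L)%nat -> adj (nth i L origin) (nth (S i) L origin)) /\
  NoDup L /\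
  (forall i j, (i < length L)%nat -> (j < length L)%nat -> (i + 2 <= j)%nat ->
      ~ adj (nth i L origin) (nth j L origin)).

Definition pos_eqb (p q : pos) : bool := (fst p =? fst q) && (snd p =? snd q).

Definition memb (L : list pos) (x : pos) : bool := existsb (pos_eqb x) L.

Definition bc (L : list pos) (p : pos) : bool * bool * bool * bool :=
  (memb L (padd p (eps 0)), memb L (padd p (eps 1)),
   memb L (padd p (eps 2)), memb L (padd p (eps 3))).

Record automaton := {
  St : Type;
  St_finite : exists l : list St, forall x : St, In x l;
  Qst : St;
  ngen : nat;
  Gen : nat -> St;
  Fire : St -> Prop;
  Q_not_fire : ~ Fire Qst;
  tau : bool * bool * bool * bool -> nat;
  tau_lt : forall b, (tau b < ngen)%nat;
  (* delta current neighbour_eps0 neighbour_eps1 neighbour_eps2 neighbour_eps3;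
     None stands for # (no node) *)
  delta : St -> option St -> option St -> option St -> option St -> St;
  Q_stable : forall a0 a1 a2 a3 : option St,
      (a0 = None \/ a0 = Some Qst) -> (a1 = None \/ a1 = Some Qst) ->
      (a2 = None \/ a2 = Some Qst) -> (a3 = None \/ a3 = Some Qst) ->
      delta Qst a0 a1 a2 a3 = Qst
}.

(* global states: a function on positions (only positions of C matter) *)
Definition nbr (A : automaton) (L : list pos) (st : pos -> St A) (y : pos)
  : option (St A) := if memb L y then Some (st y) else None.

Definition step (A : automaton) (L : list pos) (st : pos -> St A) : pos -> St A :=
  fun x => delta A (st x)
             (nbr A L st (padd x (eps 0))) (nbr A L st (padd x (eps 1)))
             (nbr A L st (padd x (eps 2))) (nbr A L st (padd x (eps 3))).

Definition init (A : automaton) (L : list pos) : pos -> St A :=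
  fun x => if pos_eqb x origin then Gen A (tau A (bc L origin)) else Qst A.

Definition state (A : automaton) (L : list pos) (t : nat) : pos -> St A :=
  Nat.iter t (step A L) (init A L).

Definition fires_at (A : automaton) (L : list pos) (t : nat) : Prop :=
  (forall t', (t' < t)%nat -> forall x, In x L -> ~ Fire A (state A L t' x)) /\
  (forall x, In x L -> Fire A (state A L t x)).

Definition is_solution (A : automaton) : Prop :=
  forall k L, is_config k L -> exists t, fires_at A L t.

Definition mft_is (k : nat) (L : list pos) (n : nat) : Prop :=
  (exists A, is_solution A /\ fires_at A L n) /\
  (forall A, is_solution A -> forall t, fires_at A L t -> (n <= t)%nat).

(* segment p_i ... p_j, given by list indices a = i + k, b = j + k *)
Definition segment (L : list pos) (a b : nat) : list pos :=
  firstn (S b - a) (skipn a L).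

(* W(i,j) in list indices a = i + k, b = j + k *)
Definition W (k : nat) (L : list pos) (a b : nat) (x0 x1 : list pos) : Prop :=
  is_config (length x0 + (k - a)) (x0 ++ segment L a b ++ x1) /\
  (forall l, (a <= l <= b)%nat ->
     bc (x0 ++ segment L a b ++ x1) (nth l L origin) = bc L (nth l L origin)).

Definition f_infinite (k : nat) (L : list pos) (a b : nat) : Prop :=
  forall n : nat, exists x0 x1, W k L a b x0 x1 /\ (n <= length x0)%nat.
Definition g_infinite (k : nat) (L : list pos) (a b : nat) : Prop :=
  forall n : nat, exists x0 x1, W k L a b x0 x1 /\ (n <= length x1)%nat.

Definition s_of (k : nat) (L : list pos) : nat := (length L - 1 - k)%nat.

(* left hand free: r = 0 or (r < 0 and f(r+1, s) = infinity) *)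
Definition left_free (k : nat) (L : list pos) : Prop :=
  k = 0%nat \/ ((0 < k)%nat /\ f_infinite k L 1 (length L - 1)).

(* right hand free: s = 0 or (s > 0 and g(r, s-1) = infinity) *)
Definition right_free (k : nat) (L : list pos) : Prop :=
  s_of k L = 0%nat \/ ((0 < s_of k L)%nat /\ g_infinite k L 0 (length L - 2)).

Definition type_II (k : nat) (L : list pos) : Prop :=
  (left_free k L /\ ~ right_free k L) \/ (~ left_free k L /\ right_free k L).

(* Write k = -r and s for the distances from the general to the two ends of C.

   Lower bound: as the left hand is free, p_(r+1) ... p_s is part of configurations
   x0 p_(r+1) ... p_s x1 with the same boundary conditions on p_(r+1) ... p_s and
   arbitrarily long x0. News from p_r reaches p_l only at time k + l, so up to time
   k + l - 1 every automaton puts p_l in the same state in C and in such an extension.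
   If p_s fired before time k + (k + s) in C, it would fire at the same time in an
   extension whose far left end is still quiescent then.

   Upper bound: every node records which of its neighbours precede and follow it on
   the path, so that the path behaves as a line. The general starts a clock wave; an end
   node reached by it knows its distance to the general and sends it back, hence every
   node learns k and s in time to fire at k + s + max(k, s) = 2k + s. The counters only
   need to reach 3|C|; on configurations with longer arms the automaton falls back on a
   classical firing squad started from the left end. The general cannot tell its two
   neighbours apart, which is harmless since the construction is symmetric. *)

From Stdlib Require Import ZArith List Arith Lia Bool Btauto Eqdep_dec FunctionalExtensionality.
Import ListNotations.
Open Scope nat_scope.

Ltac b2p := repeat (rewrite ?andb_false_r, ?orb_false_r, ?andb_true_r, ?orb_true_r,
  ?andb_false_l, ?orb_false_l, ?andb_true_l, ?orb_true_l in *);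
  repeat (rewrite ?orb_true_iff, ?andb_true_iff, ?Nat.eqb_eq, ?Nat.leb_le, ?Nat.ltb_lt,
   ?orb_false_iff, ?andb_false_iff, ?Nat.eqb_neq, ?Nat.leb_gt, ?Nat.ltb_ge,
   ?negb_true_iff, ?negb_false_iff in *).

Ltac bsolve := match goal with |- ?a = ?b =>
  destruct a eqn:?E1; destruct b eqn:?E2; try reflexivity; b2p; exfalso; lia end.

(** * A firing squad on a line *)

Inductive phase := Ph0 | Ph1 | Ph2.

(* A soldier carries a fast signal (speed 1) and a slow signal (speed 1/3, the phase
   counting the steps spent on the current cell) in each direction. [NewGeneral] is a
   general created in this very step; it emits both kinds of signals. *)
Inductive cell :=
  Soldier (fastR fastL : bool) (slowR slowL : option phase) | General | NewGeneral | Fired.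

Definition quiet : cell := Soldier false false None None.

Definition mirror (c : cell) : cell :=
  match c with Soldier a b c d => Soldier b a d c | c => c end.
Definition mirror_opt (o : option cell) : option cell := option_map mirror o.

Definition fastR_of (o : option cell) : bool :=
  match o with Some (Soldier a _ _ _) => a | _ => false end.
Definition fastL_of (o : option cell) : bool :=
  match o with Some (Soldier _ b _ _) => b | _ => false end.
Definition slowR_leaving (o : option cell) : bool :=
  match o with Some (Soldier _ _ (Some Ph2) _) => true | _ => false end.
Definition slowL_leaving (o : option cell) : bool :=
  match o with Some (Soldier _ _ _ (Some Ph2)) => true | _ => false end.
Definition is_new_general (o : option cell) : bool :=
  match o with Some NewGeneral => true | _ => false end.
Definition is_wall (o : option cell) : bool :=
  match o with None | Some General => true | _ => false end.
Definition general_or_border (o : option cell) : bool :=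
  match o with None | Some General | Some NewGeneral => true | _ => false end.
Definition next_phase (p : option phase) : option phase :=
  match p with Some Ph0 => Some Ph1 | Some Ph1 => Some Ph2 | _ => None end.
Definition is_ph0 (p : option phase) : bool := match p with Some Ph0 => true | _ => false end.
Definition is_ph2 (p : option phase) : bool := match p with Some Ph2 => true | _ => false end.

(* A fast signal reflected by a wall meets the slow signal in the middle of the
   segment, where one or two new generals are created. *)
Definition cell_step (l : option cell) (c : cell) (r : option cell) : cell :=
  match c with
  | General | NewGeneral => if general_or_border l && general_or_border r then Fired else General
  | Fired => Fired
  | Soldier fR fL sR sL =>
    let nfR := fastR_of l || is_new_general l || (fL && is_wall l) in
    let nfL := fastL_of r || is_new_general r || (fR && is_wall r) in
    let nsR := if is_new_general l || slowR_leaving l then Some Ph0 else next_phase sR in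
    let nsL := if is_new_general r || slowL_leaving r then Some Ph0 else next_phase sL in
    if (is_ph0 sR && nfL) || (is_ph2 sR && fastL_of r) || (fL && slowR_leaving l)
       || (is_ph0 sL && nfR) || (is_ph2 sL && fastR_of l) || (fR && slowL_leaving r)
    then NewGeneral else Soldier nfR nfL nsR nsL
  end.

Lemma cell_step_mirror l c r :
  cell_step (mirror_opt r) (mirror c) (mirror_opt l) = mirror (cell_step l c r).
Proof.
  assert (E : forall o, general_or_border (mirror_opt o) = general_or_border o)
    by (intros [[]|]; reflexivity).
  destruct c as [fR fL sR sL| | |]; cbn [cell_step mirror];
    rewrite ?E, ?(andb_comm (general_or_border r));
    try (destruct (_ && _); reflexivity); try reflexivity.
  assert (E1 : forall o, fastR_of (mirror_opt o) = fastL_of o) by (intros [[]|]; reflexivity).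
  assert (E2 : forall o, fastL_of (mirror_opt o) = fastR_of o) by (intros [[]|]; reflexivity).
  assert (E3 : forall o, slowR_leaving (mirror_opt o) = slowL_leaving o)
    by (intros [[? ? ? [[]|]| | |]|]; reflexivity).
  assert (E4 : forall o, slowL_leaving (mirror_opt o) = slowR_leaving o)
    by (intros [[? ? [[]|] ?| | |]|]; reflexivity).
  assert (E5 : forall o, is_new_general (mirror_opt o) = is_new_general o)
    by (intros [[]|]; reflexivity).
  assert (E6 : forall o, is_wall (mirror_opt o) = is_wall o) by (intros [[]|]; reflexivity).
  rewrite !E1, !E2, !E3, !E4, !E5, !E6.
  match goal with |- (if ?a then _ else _) = mirror (if ?b then _ else _) =>
    replace a with b by btauto; destruct b; reflexivity end.
Qed.

Lemma general_or_border_mirror c : general_or_border (Some (mirror c)) = general_or_border (Some c).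
Proof. destruct c; reflexivity. Qed.

Lemma general_or_border_cases c :
  general_or_border (Some c) = true -> c = General \/ c = NewGeneral.
Proof. destruct c; simpl; try discriminate; auto. Qed.

Lemma cell_step_general l c r : c = General \/ c = NewGeneral ->
  cell_step l c r = if general_or_border l && general_or_border r then Fired else General.
Proof. intros [-> | ->]; reflexivity. Qed.

(* [first_round m t x]: cell [x] of a segment of [m] soldiers at time [t], the left
   neighbour being a general started at time 0, until the new generals appear. *)
Definition meet_time (m : nat) : nat :=
  if Nat.even m then 3 * (m / 2) + 1 else 3 * (m / 2) + 2.
Definition half (m : nat) : nat := if Nat.even m then m / 2 - 1 else m / 2.
Definition mid (m : nat) : nat := m / 2.
Definition in_middle (m x : nat) : bool := (half m <=? x) && (x <=? mid m).
Definition fast_right (m t x : nat) : bool := (t =? x + 1) && (t <=? m).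
Definition fast_left (m t x : nat) : bool := (x + t =? 2 * m) && (m + 1 <=? t).
Definition slow_right (t x : nat) : option phase :=
  if t =? 3 * x + 1 then Some Ph0 else if t =? 3 * x + 2 then Some Ph1
  else if t =? 3 * x + 3 then Some Ph2 else None.
Definition first_round (m t x : nat) : cell :=
  if (t =? meet_time m) && in_middle m x then NewGeneral
  else Soldier (fast_right m t x) (fast_left m t x) (slow_right t x) None.

Lemma half_cases m : exists y,
  (m = 2 * y /\ meet_time m = 3 * y + 1 /\ half m = y - 1 /\ mid m = y) \/
  (m = 2 * y + 1 /\ meet_time m = 3 * y + 2 /\ half m = y /\ mid m = y).
Proof.
  destruct (Nat.Even_or_Odd m) as [[y Hy]|[y Hy]]; exists y; subst m.
  - left. assert (E : 2 * y / 2 = y) by (rewrite Nat.mul_comm, Nat.div_mul; lia).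
    unfold meet_time, half, mid. rewrite Nat.even_mul, E. cbn. lia.
  - right. unfold meet_time, half, mid.
    replace (Nat.even (2 * y + 1)) with false
      by (rewrite Nat.add_comm, Nat.even_add_mul_2; reflexivity).
    replace ((2 * y + 1) / 2) with y
      by (rewrite Nat.add_comm, Nat.mul_comm, Nat.div_add by lia; reflexivity).
    lia.
Qed.

Ltac destruct_half m :=
  let y := fresh "y" in let E := fresh "E" in
  let E1 := fresh "E" in let E2 := fresh "E" in let E3 := fresh "E" in
  destruct (half_cases m) as [y [(E & E1 & E2 & E3)|(E & E1 & E2 & E3)]];
  rewrite ?E1, ?E2, ?E3 in *.

Lemma half_sizes m : 1 <= m ->
  mid m + 1 + half m = m /\ half m <= mid m /\ mid m <= half m + 1 /\ half m < m.
Proof. intros. destruct_half m; lia. Qed.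

Lemma meet_time_bounds m : 1 <= meet_time m /\ m <= meet_time m.
Proof. destruct_half m; lia. Qed.

Lemma in_middle_iff m x : in_middle m x = true <-> half m <= x /\ x <= mid m.
Proof. unfold in_middle. b2p. tauto. Qed.

Lemma first_round_before_meet m t x : t < meet_time m ->
  first_round m t x = Soldier (fast_right m t x) (fast_left m t x) (slow_right t x) None.
Proof.
  intros H. unfold first_round. replace (t =? meet_time m) with false by (symmetry; b2p; lia).
  reflexivity.
Qed.

Lemma is_ph0_slow_right t x : is_ph0 (slow_right t x) = (t =? 3 * x + 1).
Proof.
  unfold slow_right. destruct (t =? 3 * x + 1) eqn:?; [reflexivity|].
  destruct (t =? 3 * x + 2); [reflexivity|]. destruct (t =? 3 * x + 3); reflexivity.
Qed.

Lemma is_ph2_slow_right t x : is_ph2 (slow_right t x) = (t =? 3 * x + 3).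
Proof.
  unfold slow_right.
  repeat match goal with |- context [?a =? ?b] => destruct (Nat.eqb_spec a b) end;
    try reflexivity; exfalso; lia.
Qed.

Lemma fast_right_next m t x : t < meet_time m -> x < m ->
  ((1 <=? x) && fast_right m t (x - 1)) || ((x =? 0) && (t =? 0))
    || fast_left m t x && ((x =? 0) && negb (t =? 0)) = fast_right m (S t) x.
Proof. intros. unfold fast_right, fast_left. destruct_half m; bsolve. Qed.

Lemma fast_left_next m t x : x < m ->
  ((x + 1 <? m) && fast_left m t (x + 1)) || (fast_right m t x && (x + 1 =? m))
    = fast_left m (S t) x.
Proof. intros. unfold fast_right, fast_left. bsolve. Qed.

Lemma slow_right_next t x :
  (if ((x =? 0) && (t =? 0)) || ((1 <=? x) && (t =? 3 * (x - 1) + 3)) then Some Ph0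
   else next_phase (slow_right t x)) = slow_right (S t) x.
Proof.
  unfold slow_right.
  repeat match goal with |- context [?a =? ?b] => destruct (Nat.eqb_spec a b) end;
  repeat match goal with |- context [?a <=? ?b] => destruct (Nat.leb_spec a b) end;
    cbn; try reflexivity; exfalso; lia.
Qed.

Lemma meeting_next m t x : 1 <= m -> t < meet_time m -> x < m ->
  is_ph0 (slow_right t x) && fast_left m (S t) x
    || is_ph2 (slow_right t x) && ((x + 1 <? m) && fast_left m t (x + 1))
    || fast_left m t x && ((1 <=? x) && (t =? 3 * (x - 1) + 3))
  = (S t =? meet_time m) && in_middle m x.
Proof.
  intros. rewrite is_ph0_slow_right, is_ph2_slow_right. unfold fast_left, in_middle.
  destruct_half m; bsolve.
Qed.

(* The left neighbour of cell 0 is the general; the right neighbour of the last cell is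
   a border or a general [W]. *)
Definition round_left (t x : nat) (c : cell) : option cell :=
  if x =? 0 then Some (if t =? 0 then NewGeneral else General) else Some c.
Definition round_right (m x : nat) (W c : option cell) : option cell :=
  if x =? m - 1 then W else c.

Lemma first_round_step m t x W : 1 <= m -> t < meet_time m -> x < m -> is_wall W = true ->
  cell_step (round_left t x (first_round m t (x - 1))) (first_round m t x)
            (round_right m x W (Some (first_round m t (x + 1))))
  = first_round m (S t) x.
Proof.
  intros Hm Ht Hx HW.
  rewrite !(first_round_before_meet m t) by exact Ht.
  set (l := round_left _ _ _). set (r := round_right _ _ _ _).
  assert (L1 : fastR_of l = (1 <=? x) && fast_right m t (x - 1))
    by (subst l; unfold round_left; destruct x, t; reflexivity).
  assert (L2 : is_new_general l = (x =? 0) && (t =? 0))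
    by (subst l; unfold round_left; destruct x, t; reflexivity).
  assert (L3 : is_wall l = (x =? 0) && negb (t =? 0))
    by (subst l; unfold round_left; destruct x, t; reflexivity).
  assert (L4 : slowR_leaving l = (1 <=? x) && (t =? 3 * (x - 1) + 3)).
  { subst l; unfold round_left. destruct x; [destruct t; reflexivity|]. cbn [Nat.eqb slowR_leaving].
    rewrite <- is_ph2_slow_right. destruct (slow_right t (S x - 1)) as [[]|]; reflexivity. }
  assert (R0 : forall o, is_wall o = true -> fastL_of o = false /\ is_new_general o = false
                 /\ slowL_leaving o = false) by (intros [[]|]; cbn; easy).
  assert (R1 : fastL_of r = (x + 1 <? m) && fast_left m t (x + 1)).
  { subst r; unfold round_right. destruct (Nat.eqb_spec x (m - 1)).
    - replace (x + 1 <? m) with false by (symmetry; b2p; lia). apply R0, HW.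
    - replace (x + 1 <? m) with true by (symmetry; b2p; lia). reflexivity. }
  assert (R2 : is_new_general r = false /\ slowL_leaving r = false).
  { subst r; unfold round_right. destruct (x =? m - 1); [apply R0, HW|]. split; reflexivity. }
  assert (R3 : is_wall r = (x + 1 =? m)).
  { subst r; unfold round_right. destruct (Nat.eqb_spec x (m - 1)).
    - rewrite HW. symmetry. b2p. lia.
    - symmetry. b2p. lia. }
  destruct R2 as [R2 R2'].
  cbn [cell_step is_ph0 is_ph2 next_phase]. rewrite L1, L2, L3, L4, R1, R2, R2', R3.
  rewrite ?andb_false_l, ?andb_false_r, ?orb_false_r.
  rewrite fast_right_next, fast_left_next, slow_right_next, meeting_next by lia.
  unfold first_round. destruct (_ && _); reflexivity.
Qed.

(* The classical firing squad: after the first round both halves are solved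
   recursively, the left one mirrored, with the new generals as common left end. *)
Fixpoint fsq_time_fuel (f m : nat) : nat :=
  match f, m with
  | 0, _ | _, 0 => 0
  | S f', _ => meet_time m + fsq_time_fuel f' (half m)
  end.
Definition fsq_time (m : nat) : nat := fsq_time_fuel m m.

Fixpoint fsq_fuel (f m t x : nat) : cell :=
  match f with
  | 0 => first_round m t x
  | S f' =>
    if (m =? 0) || (t <=? meet_time m) then first_round m t x
    else if in_middle m x then General
    else if x <? half m then mirror (fsq_fuel f' (half m) (t - meet_time m) (half m - 1 - x))
    else fsq_fuel f' (half m) (t - meet_time m) (x - mid m - 1)
  end.
Definition fsq (m t x : nat) : cell := fsq_fuel m m t x.

Lemma fsq_time_fuel_enough f1 f2 m : m <= f1 -> m <= f2 ->
  fsq_time_fuel f1 m = fsq_time_fuel f2 m.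
Proof.
  revert f2 m; induction f1 as [|f1 IH]; intros f2 m H1 H2.
  - replace m with 0 by lia. destruct f2; reflexivity.
  - destruct f2 as [|f2]; [replace m with 0 by lia; reflexivity|].
    destruct m as [|m']; [reflexivity|]. cbn -[half meet_time].
    f_equal. apply IH; pose proof (half_sizes (S m')); lia.
Qed.

Lemma fsq_fuel_enough f1 f2 m t x : m <= f1 -> m <= f2 ->
  fsq_fuel f1 m t x = fsq_fuel f2 m t x.
Proof.
  revert f2 m t x; induction f1 as [|f1 IH]; intros f2 m t x H1 H2.
  - replace m with 0 by lia. destruct f2; reflexivity.
  - destruct m as [|m']; [destruct f2; reflexivity|].
    destruct f2 as [|f2]; [lia|]. cbn -[half meet_time mid in_middle].
    destruct (t <=? meet_time (S m')); [reflexivity|].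
    destruct (in_middle (S m') x); [reflexivity|].
    pose proof (half_sizes (S m')). rewrite !(IH f2) by lia. reflexivity.
Qed.

Lemma fsq_time_eq m : 1 <= m -> fsq_time m = meet_time m + fsq_time (half m).
Proof.
  intros H. unfold fsq_time. destruct m as [|m']; [lia|]. cbn -[half meet_time].
  f_equal. apply fsq_time_fuel_enough; pose proof (half_sizes (S m')); lia.
Qed.

Lemma fsq_eq m t x : 1 <= m -> fsq m t x =
  if t <=? meet_time m then first_round m t x
  else if in_middle m x then General
  else if x <? half m then mirror (fsq (half m) (t - meet_time m) (half m - 1 - x))
  else fsq (half m) (t - meet_time m) (x - mid m - 1).
Proof.
  intros H. unfold fsq. destruct m as [|m']; [lia|]. cbn -[half meet_time mid in_middle].
  destruct (t <=? meet_time (S m')); [reflexivity|].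
  destruct (in_middle (S m') x); [reflexivity|].
  pose proof (half_sizes (S m')). rewrite !(fsq_fuel_enough m' (half (S m'))) by lia.
  reflexivity.
Qed.

Lemma fsq_time_ge m : 2 * m <= fsq_time m.
Proof.
  induction m as [m IH] using (well_founded_induction lt_wf).
  destruct m as [|m']; [reflexivity|].
  rewrite fsq_time_eq by lia. destruct (half_sizes (S m')) as (_ & _ & _ & Hh); [lia|].
  specialize (IH _ Hh). destruct_half (S m'); lia.
Qed.

Lemma first_round_0 m x : first_round m 0 x = quiet.
Proof.
  pose proof (meet_time_bounds m).
  rewrite first_round_before_meet by lia. unfold fast_right, fast_left, slow_right.
  rewrite !Nat.add_comm with (m := 1), !Nat.add_comm with (m := 2), !Nat.add_comm with (m := 3),
    andb_false_r. reflexivity.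
Qed.

Lemma fsq_0 m x : fsq m 0 x = quiet.
Proof.
  destruct m as [|m']; [apply first_round_0|].
  rewrite fsq_eq by lia. apply first_round_0.
Qed.

Lemma first_round_meet m x : 1 <= m -> in_middle m x = false ->
  first_round m (meet_time m) x = quiet.
Proof.
  intros Hm Hx. unfold first_round. rewrite Hx, andb_false_r.
  apply not_true_iff_false in Hx. rewrite in_middle_iff in Hx.
  unfold fast_right, fast_left, slow_right, quiet.
  replace (meet_time m <=? m) with false by (symmetry; b2p; destruct_half m; lia).
  rewrite andb_false_r. destruct_half m;
  repeat match goal with |- context [?a =? ?b] =>
    replace (a =? b) with false by (symmetry; b2p; lia) end;
  rewrite ?andb_false_l; reflexivity.
Qed.

Lemma fsq_after_meet m t x : 1 <= m -> meet_time m <= t -> fsq m t x =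
  if in_middle m x then (if t =? meet_time m then NewGeneral else General)
  else if x <? half m then mirror (fsq (half m) (t - meet_time m) (half m - 1 - x))
  else fsq (half m) (t - meet_time m) (x - mid m - 1).
Proof.
  intros Hm Ht. rewrite fsq_eq by exact Hm.
  destruct (Nat.eq_dec t (meet_time m)) as [->|Hne].
  - rewrite Nat.leb_refl, Nat.eqb_refl, Nat.sub_diag.
    destruct (in_middle m x) eqn:Em.
    + unfold first_round. rewrite Nat.eqb_refl, Em. reflexivity.
    + rewrite first_round_meet, !fsq_0 by assumption. destruct (x <? half m); reflexivity.
  - replace (t <=? meet_time m) with false by (symmetry; b2p; lia).
    replace (t =? meet_time m) with false by (symmetry; b2p; lia). reflexivity.
Qed.

Lemma first_round_not_fired m t x : first_round m t x <> Fired.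
Proof. unfold first_round. destruct (_ && _); discriminate. Qed.

Lemma fsq_not_fired m t x : fsq m t x <> Fired.
Proof.
  unfold fsq. generalize m at 1 as f. intros f. revert m t x.
  induction f as [|f IH]; intros m t x; simpl; [apply first_round_not_fired|].
  destruct (_ || _); [apply first_round_not_fired|].
  destruct (in_middle m x); [discriminate|].
  destruct (x <? half m); [|apply IH].
  specialize (IH (half m) (t - meet_time m) (half m - 1 - x)).
  destruct (fsq_fuel _ _ _ _); simpl; congruence.
Qed.

Lemma fsq_quiet_cone m t x : x < m -> t <= x -> fsq m t x = quiet.
Proof.
  intros Hx Ht. pose proof (meet_time_bounds m).
  rewrite fsq_eq by lia. replace (t <=? meet_time m) with true by (symmetry; b2p; lia).
  rewrite first_round_before_meet by lia. unfold fast_right, fast_left, slow_right, quiet.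
  replace (t =? x + 1) with false by (symmetry; b2p; lia).
  replace (x + t =? 2 * m) with false by (symmetry; b2p; lia).
  replace (t =? 3 * x + 1) with false by (symmetry; b2p; lia).
  replace (t =? 3 * x + 2) with false by (symmetry; b2p; lia).
  replace (t =? 3 * x + 3) with false by (symmetry; b2p; lia). reflexivity.
Qed.

Lemma half_0 m : 1 <= m -> half m = 0 -> fsq_time m = meet_time m /\ mid m + 1 = m.
Proof.
  intros Hm Hs. rewrite fsq_time_eq, Hs by lia. destruct_half m; cbn; lia.
Qed.

Lemma half_pos m : 1 <= m -> meet_time m < fsq_time m -> 1 <= half m.
Proof. intros Hm H. destruct (half m) eqn:E; [|lia]. apply half_0 in E; lia. Qed.

Lemma fsq_ends_active m t : 1 <= m -> t < fsq_time m ->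
  general_or_border (Some (fsq m t 0)) = false /\
  general_or_border (Some (fsq m t (m - 1))) = false.
Proof.
  revert t. induction m as [m IH] using (well_founded_induction lt_wf). intros t Hm Ht.
  destruct (half_sizes m Hm) as (S1 & S2 & S3 & S4).
  destruct (Nat.le_gt_cases t (meet_time m)) as [Hle|Hgt].
  - rewrite !(fsq_eq m t) by exact Hm. rewrite !(proj2 (Nat.leb_le _ _) Hle).
    assert (Hs : 1 <= half m \/ t < meet_time m).
    { destruct (half m) eqn:E; [|lia]. apply half_0 in E; lia. }
    unfold first_round, in_middle.
    destruct_half m; split;
    match goal with |- general_or_border (Some (if ?c then _ else _)) = _ =>
      replace c with false by (symmetry; b2p; lia) end; reflexivity.
  - assert (Hs := half_pos m Hm ltac:(lia)).
    rewrite fsq_time_eq in Ht by exact Hm.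
    destruct (IH (half m) S4 (t - meet_time m) Hs ltac:(lia)) as [IH1 IH2].
    rewrite !(fsq_after_meet m t) by lia. unfold in_middle.
    replace (half m <=? 0) with false by (symmetry; b2p; lia).
    replace (m - 1 <=? mid m) with false by (symmetry; b2p; lia).
    replace (0 <? half m) with true by (symmetry; b2p; lia).
    replace (m - 1 <? half m) with false by (symmetry; b2p; lia).
    rewrite andb_false_l, andb_false_r, general_or_border_mirror, Nat.sub_0_r.
    replace (m - 1 - mid m - 1) with (half m - 1) by lia. auto.
Qed.

Lemma fsq_final m x : 1 <= m -> x < m -> general_or_border (Some (fsq m (fsq_time m) x)) = true.
Proof.
  revert x. induction m as [m IH] using (well_founded_induction lt_wf). intros x Hm Hx.
  destruct (half_sizes m Hm) as (S1 & S2 & S3 & S4).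
  pose proof (meet_time_bounds (half m)).
  destruct (half m) eqn:Es.
  - destruct (half_0 m Hm Es) as (E1 & E3). rewrite E1.
    rewrite fsq_after_meet, Nat.eqb_refl by lia.
    replace (in_middle m x) with true by (symmetry; apply in_middle_iff; lia). reflexivity.
  - rewrite <- Es in *. assert (HT := fsq_time_eq m Hm).
    assert (HT' := fsq_time_eq (half m) ltac:(lia)).
    rewrite fsq_after_meet by lia.
    destruct (in_middle m x) eqn:Em.
    + replace (fsq_time m =? meet_time m) with false by (symmetry; b2p; lia). reflexivity.
    + apply not_true_iff_false in Em. rewrite in_middle_iff in Em.
      replace (fsq_time m - meet_time m) with (fsq_time (half m)) by lia.
      destruct (Nat.ltb_spec x (half m)); rewrite ?general_or_border_mirror; apply IH; lia.
Qed.

Lemma fsq_middle m t x : 1 <= m -> meet_time m <= t -> half m <= x <= mid m ->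
  fsq m t x = if t =? meet_time m then NewGeneral else General.
Proof.
  intros. rewrite fsq_after_meet by lia.
  replace (in_middle m x) with true by (symmetry; apply in_middle_iff; lia). reflexivity.
Qed.

Lemma fsq_left_half m t x : 1 <= m -> meet_time m <= t -> x < half m ->
  fsq m t x = mirror (fsq (half m) (t - meet_time m) (half m - 1 - x)).
Proof.
  intros. rewrite fsq_after_meet by lia.
  replace (in_middle m x) with false by (symmetry; apply not_true_iff_false;
    rewrite in_middle_iff; lia).
  replace (x <? half m) with true by (symmetry; b2p; lia). reflexivity.
Qed.

Lemma fsq_right_half m t x : 1 <= m -> meet_time m <= t -> mid m < x ->
  fsq m t x = fsq (half m) (t - meet_time m) (x - mid m - 1).
Proof.
  intros. pose proof (half_sizes m). rewrite fsq_after_meet by lia.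
  replace (in_middle m x) with false by (symmetry; apply not_true_iff_false;
    rewrite in_middle_iff; lia).
  replace (x <? half m) with false by (symmetry; b2p; lia). reflexivity.
Qed.

Definition fsq_steps (m : nat) : Prop :=
  forall t x W, t < fsq_time m -> x < m -> is_wall W = true ->
  cell_step (round_left t x (fsq m t (x - 1))) (fsq m t x)
            (round_right m x W (Some (fsq m t (x + 1)))) = fsq m (S t) x.

Section AfterMeet.

Variables (m t : nat).
Hypothesis Hm : 1 <= m.
Hypothesis Ht : meet_time m <= t < fsq_time m.

Let tau := t - meet_time m.

Lemma after_meet_half : 1 <= half m /\ tau < fsq_time (half m).
Proof.
  pose proof (fsq_time_eq m Hm). split; [apply half_pos|unfold tau]; lia.
Qed.

Lemma fsq_step_middle x W : half m <= x <= mid m ->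
  cell_step (round_left t x (fsq m t (x - 1))) (fsq m t x)
            (round_right m x W (Some (fsq m t (x + 1)))) = fsq m (S t) x.
Proof.
  intros Hx. destruct after_meet_half as [Hh Htau].
  destruct (half_sizes m Hm) as (S1 & S2 & S3 & S4).
  destruct (fsq_ends_active (half m) tau Hh Htau) as [G1 _].
  rewrite !(fsq_middle m _ x), cell_step_general by (try destruct (_ =? _); auto; lia).
  replace (S t =? meet_time m) with false by (symmetry; b2p; lia).
  unfold round_left, round_right.
  destruct (Nat.eq_dec x (half m)) as [->|Hne].
  - replace (half m =? 0) with false by (symmetry; b2p; lia).
    rewrite fsq_left_half, general_or_border_mirror by lia.
    replace (half m - 1 - (half m - 1)) with 0 by lia. fold tau. rewrite G1. reflexivity.
  - replace (x =? m - 1) with false by (symmetry; b2p; lia).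
    rewrite (fsq_right_half m t (x + 1)) by lia.
    replace (x + 1 - mid m - 1) with 0 by lia. fold tau. rewrite G1, andb_false_r.
    reflexivity.
Qed.

Hypothesis IH : fsq_steps (half m).

Lemma fsq_step_left_half x W : x < half m ->
  cell_step (round_left t x (fsq m t (x - 1))) (fsq m t x)
            (round_right m x W (Some (fsq m t (x + 1)))) = fsq m (S t) x.
Proof.
  intros Hx. destruct after_meet_half as [Hh Htau].
  destruct (half_sizes m Hm) as (S1 & S2 & S3 & S4).
  set (y := half m - 1 - x).
  rewrite (fsq_left_half m t x), (fsq_left_half m (S t) x) by lia.
  replace (S t - meet_time m) with (S tau) by (unfold tau; lia). fold tau y.
  rewrite <- (IH tau y (Some General)), <- cell_step_mirror by (reflexivity || lia).
  f_equal; unfold round_left, round_right.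
  - destruct (Nat.eqb_spec x 0).
    + replace (y =? half m - 1) with true by (symmetry; b2p; lia).
      replace (t =? 0) with false by (symmetry; b2p; pose proof (meet_time_bounds m); lia).
      reflexivity.
    + replace (y =? half m - 1) with false by (symmetry; b2p; lia).
      rewrite (fsq_left_half m t (x - 1)) by lia. fold tau.
      replace (half m - 1 - (x - 1)) with (y + 1) by lia. reflexivity.
  - replace (x =? m - 1) with false by (symmetry; b2p; lia).
    destruct (Nat.eqb_spec y 0).
    + rewrite (fsq_middle m t) by lia. replace (tau =? 0) with (t =? meet_time m)
        by (apply eq_true_iff_eq; b2p; unfold tau; lia).
      destruct (t =? meet_time m); reflexivity.
    + rewrite (fsq_left_half m t (x + 1)) by lia. fold tau.
      replace (half m - 1 - (x + 1)) with (y - 1) by lia. reflexivity.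
Qed.

Lemma fsq_step_right_half x W : mid m < x < m -> is_wall W = true ->
  cell_step (round_left t x (fsq m t (x - 1))) (fsq m t x)
            (round_right m x W (Some (fsq m t (x + 1)))) = fsq m (S t) x.
Proof.
  intros Hx HW. destruct after_meet_half as [Hh Htau].
  destruct (half_sizes m Hm) as (S1 & S2 & S3 & S4).
  set (y := x - mid m - 1).
  rewrite (fsq_right_half m t x), (fsq_right_half m (S t) x) by lia.
  replace (S t - meet_time m) with (S tau) by (unfold tau; lia). fold tau y.
  rewrite <- (IH tau y W) by (assumption || lia).
  f_equal; unfold round_left, round_right.
  - replace (x =? 0) with false by (symmetry; b2p; lia).
    destruct (Nat.eqb_spec y 0).
    + rewrite (fsq_middle m t) by lia. replace (tau =? 0) with (t =? meet_time m)
        by (apply eq_true_iff_eq; b2p; unfold tau; lia). reflexivity.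
    + rewrite (fsq_right_half m t (x - 1)) by lia. fold tau.
      replace (x - 1 - mid m - 1) with (y - 1) by lia. reflexivity.
  - destruct (Nat.eqb_spec x (m - 1)).
    + replace (y =? half m - 1) with true by (symmetry; b2p; lia). reflexivity.
    + replace (y =? half m - 1) with false by (symmetry; b2p; lia).
      rewrite (fsq_right_half m t (x + 1)) by lia. fold tau.
      replace (x + 1 - mid m - 1) with (y + 1) by lia. reflexivity.
Qed.

End AfterMeet.

Lemma fsq_step m : 1 <= m -> fsq_steps m.
Proof.
  induction m as [m IH] using (well_founded_induction lt_wf). intros Hm t x W Ht Hx HW.
  destruct (Nat.lt_ge_cases t (meet_time m)) as [Hlt|Hge].
  - assert (E : forall t z, t <= meet_time m -> fsq m t z = first_round m t z)
      by (intros; rewrite fsq_eq by lia; rewrite (proj2 (Nat.leb_le _ _)) by lia; reflexivity).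
    rewrite !E by lia. apply first_round_step; assumption.
  - destruct (half_sizes m Hm) as (S1 & S2 & S3 & S4).
    assert (Hh : 1 <= half m) by (apply half_pos; lia).
    destruct (Nat.lt_ge_cases x (half m)); [|destruct (Nat.le_gt_cases x (mid m))].
    + apply fsq_step_left_half; auto.
    + apply fsq_step_middle; auto.
    + apply fsq_step_right_half; auto.
Qed.

(** * Measuring the arms of the path *)

Record lstate := LState
  { clock : option nat; left_arm : option nat; right_arm : option nat; soldier : cell }.

Definition lquiet : lstate := LState None None None quiet.

Section Line.

Variable M : nat.

(* Counters saturate at [cap]: the state set stays finite, while a firing time
   [a + b + max a b] with [a, b <= M] and an arm longer than [M] remain visible. *)
Definition cap : nat := 3 * M + 3.
Definition capped (x : nat) : nat := Nat.min x cap.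
Definition lcap (s : lstate) : lstate :=
  LState (option_map capped (clock s)) (option_map capped (left_arm s))
         (option_map capped (right_arm s)) (soldier s).

(* [hl] and [hr] tell whether the general has a left and a right neighbour. *)
Definition lgeneral (hl hr : bool) : lstate :=
  LState (Some 0) (if hl then None else Some 0) (if hr then None else Some 0)
         (if hl then quiet else NewGeneral).

Definition clock_opt (o : option lstate) : option nat :=
  match o with Some s => clock s | None => None end.

(* The clock wave of the general tells every node the current time. A reached end node
   knows its distance to the general and sends it along the path; the reached left end
   moreover becomes the general of the classical firing squad. *)
Definition lstep_raw (l : option lstate) (c : lstate) (r : option lstate) : lstate :=
  let nclock := match clock c, clock_opt l, clock_opt r with
                | Some x, _, _ | None, Some x, _ | None, None, Some x => Some (S x)
                | None, None, None => None end in
  let nleft := match left_arm c, l with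
               | Some v, _ => Some v | None, None => nclock | None, Some ls => left_arm ls end in
  let nright := match right_arm c, r with
                | Some v, _ => Some v | None, None => nclock | None, Some rs => right_arm rs end in
  let nsoldier := match l, clock c, nclock with
                  | None, None, Some _ => NewGeneral
                  | _, _, _ => cell_step (option_map soldier l) (soldier c) (option_map soldier r)
                  end in
  LState nclock nleft nright nsoldier.

Definition lstep (l : option lstate) (c : lstate) (r : option lstate) : lstate :=
  lcap (lstep_raw l c r).

Definition lfires (s : lstate) : Prop :=
  (exists c a b, clock s = Some c /\ left_arm s = Some a /\ right_arm s = Some b /\
     a <= M /\ b <= M /\ c = a + b + Nat.max a b) \/
  (soldier s = Fired /\
     ((exists a, left_arm s = Some a /\ M < a) \/ (exists b, right_arm s = Some b /\ M < b))).

(* [levolve n k t i]: node [i] at time [t] of a line of [n] nodes whose general is node [k]. *)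
Fixpoint levolve (n k t : nat) : nat -> lstate :=
  match t with
  | 0 => fun i => if i =? k then lgeneral (0 <? k) (k <? n - 1) else lquiet
  | S t' => fun i => lstep (if i =? 0 then None else Some (levolve n k t' (i - 1)))
                           (levolve n k t' i)
                           (if i + 1 <? n then Some (levolve n k t' (i + 1)) else None)
  end.

Definition dist (k i : nat) : nat := (k - i) + (i - k).

Definition soldier_at (n k t i : nat) : cell :=
  if t <? k then quiet
  else if i =? 0 then
    (if t =? k then NewGeneral else if t <=? k + fsq_time (n - 1) then General else Fired)
  else if t <=? k + fsq_time (n - 1) then fsq (n - 1) (t - k) (i - 1) else Fired.

Definition lform (n k t i : nat) : lstate :=
  LState (if t <? dist k i then None else Some (capped t))
         (if t <? k + i then None else Some (capped k))
         (if t <? (n - 1 - k) + (n - 1 - i) then None else Some (capped (n - 1 - k)))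
         (soldier_at n k t i).

Lemma soldier_at_before n k t i : t < k -> soldier_at n k t i = quiet.
Proof.
  intros. unfold soldier_at. replace (t <? k) with true by (symmetry; b2p; lia). reflexivity.
Qed.

Lemma soldier_at_fsq n k t i : 1 <= i -> k <= t <= k + fsq_time (n - 1) ->
  soldier_at n k t i = fsq (n - 1) (t - k) (i - 1).
Proof.
  intros. unfold soldier_at. replace (t <? k) with false by (symmetry; b2p; lia).
  replace (i =? 0) with false by (symmetry; b2p; lia).
  replace (t <=? k + fsq_time (n - 1)) with true by (symmetry; b2p; lia). reflexivity.
Qed.

Lemma soldier_at_left_end n k t : k <= t <= k + fsq_time (n - 1) ->
  soldier_at n k t 0 = if t =? k then NewGeneral else General.
Proof.
  intros. unfold soldier_at. replace (t <? k) with false by (symmetry; b2p; lia).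
  replace (t <=? k + fsq_time (n - 1)) with true by (symmetry; b2p; lia). reflexivity.
Qed.

Lemma soldier_at_fired n k t i : k + fsq_time (n - 1) < t -> soldier_at n k t i = Fired.
Proof.
  intros. unfold soldier_at. replace (t <? k) with false by (symmetry; b2p; lia).
  replace (t <=? k + fsq_time (n - 1)) with false by (symmetry; b2p; lia).
  replace (t =? k) with false by (symmetry; b2p; lia). destruct (i =? 0); reflexivity.
Qed.

Lemma soldier_at_fired_inv n k t i : soldier_at n k t i = Fired -> k + fsq_time (n - 1) < t.
Proof.
  unfold soldier_at. intros H.
  destruct (Nat.ltb_spec t k); [discriminate|].
  destruct (i =? 0).
  - destruct (t =? k); [discriminate|].
    destruct (Nat.leb_spec t (k + fsq_time (n - 1))); [discriminate|lia].
  - destruct (Nat.leb_spec t (k + fsq_time (n - 1))); [|lia].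
    exfalso; exact (fsq_not_fired _ _ _ H).
Qed.

Lemma soldier_at_final n k i : i < n ->
  general_or_border (Some (soldier_at n k (k + fsq_time (n - 1)) i)) = true.
Proof.
  intros Hi. destruct (Nat.eqb_spec i 0) as [->|].
  - rewrite soldier_at_left_end by lia. destruct (_ =? k); reflexivity.
  - rewrite soldier_at_fsq, Nat.add_sub_swap, Nat.sub_diag by lia. apply fsq_final; lia.
Qed.

Lemma soldier_step_left_end n k t : 2 <= n -> S t <> k ->
  cell_step None (soldier_at n k t 0) (Some (soldier_at n k t 1)) = soldier_at n k (S t) 0.
Proof.
  intros Hn Hk. pose proof (fsq_time_ge (n - 1)).
  destruct (Nat.lt_ge_cases t k); [rewrite !soldier_at_before by lia; reflexivity|].
  destruct (Nat.lt_total t (k + fsq_time (n - 1))) as [H1|[H1|H1]].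
  - rewrite (soldier_at_left_end n k t), (soldier_at_left_end n k (S t)), (soldier_at_fsq n k t)
      by lia.
    rewrite cell_step_general by (destruct (t =? k); auto).
    destruct (fsq_ends_active (n - 1) (t - k) ltac:(lia) ltac:(lia)) as [G1 _].
    rewrite Nat.sub_diag, G1, andb_false_r.
    replace (S t =? k) with false by (symmetry; b2p; lia). reflexivity.
  - rewrite (soldier_at_left_end n k t), (soldier_at_fsq n k t), (soldier_at_fired n k (S t))
      by lia.
    rewrite cell_step_general by (destruct (t =? k); auto).
    replace (t - k) with (fsq_time (n - 1)) by lia. rewrite fsq_final by lia. reflexivity.
  - rewrite !soldier_at_fired by lia. reflexivity.
Qed.

Lemma soldier_step_interior n k t i : k < n -> 1 <= i < n ->
  cell_step (Some (soldier_at n k t (i - 1))) (soldier_at n k t i)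
            (if i + 1 <? n then Some (soldier_at n k t (i + 1)) else None)
  = soldier_at n k (S t) i.
Proof.
  intros Hk Hi. pose proof (fsq_time_ge (n - 1)).
  destruct (Nat.lt_ge_cases t k).
  - rewrite !(soldier_at_before n k t) by lia.
    assert (Q : soldier_at n k (S t) i = quiet).
    { destruct (Nat.lt_ge_cases (S t) k); [apply soldier_at_before; lia|].
      rewrite soldier_at_fsq by lia. replace (S t - k) with 0 by lia. apply fsq_0. }
    rewrite Q. destruct (i + 1 <? n); reflexivity.
  - destruct (Nat.lt_total t (k + fsq_time (n - 1))) as [H1|[H1|H1]].
    + rewrite (soldier_at_fsq n k t i), (soldier_at_fsq n k (S t) i) by lia.
      replace (S t - k) with (S (t - k)) by lia.
      rewrite <- (fsq_step (n - 1) ltac:(lia) (t - k) (i - 1) None) by (reflexivity || lia).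
      unfold round_left, round_right. f_equal.
      * destruct (Nat.eqb_spec (i - 1) 0).
        -- replace i with 1 by lia. rewrite soldier_at_left_end by lia.
           replace (t - k =? 0) with (t =? k) by (apply eq_true_iff_eq; b2p; lia).
           reflexivity.
        -- rewrite soldier_at_fsq by lia. reflexivity.
      * destruct (Nat.ltb_spec (i + 1) n).
        -- replace (i - 1 =? n - 1 - 1) with false by (symmetry; b2p; lia).
           rewrite soldier_at_fsq by lia. replace (i + 1 - 1) with (i - 1 + 1) by lia. reflexivity.
        -- replace (i - 1 =? n - 1 - 1) with true by (symmetry; b2p; lia). reflexivity.
    + subst t. rewrite (soldier_at_fired n k (S _) i) by lia.
      rewrite cell_step_general by (apply general_or_border_cases, soldier_at_final; lia).
      rewrite soldier_at_final by lia.
      destruct (Nat.ltb_spec (i + 1) n); [|reflexivity].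
      rewrite soldier_at_final by lia. reflexivity.
    + rewrite !soldier_at_fired by lia. reflexivity.
Qed.

Lemma lform_step n k t i : k < n -> i < n ->
  lstep (if i =? 0 then None else Some (lform n k t (i - 1))) (lform n k t i)
        (if i + 1 <? n then Some (lform n k t (i + 1)) else None) = lform n k (S t) i.
Proof.
  intros Hk Hi. unfold lstep, lcap, lstep_raw.
  destruct (Nat.eqb_spec i 0); destruct (Nat.ltb_spec (i + 1) n);
    unfold lform; cbn [clock left_arm right_arm soldier clock_opt option_map]; f_equal;
    try (unfold dist, capped;
      repeat match goal with |- context [?a <? ?b] => destruct (Nat.ltb_spec a b) end;
      cbn -[Nat.min cap]; try (exfalso; lia); try reflexivity; f_equal; lia).
  - subst i. replace (dist k 0) with k by (unfold dist; lia).
    destruct (Nat.eq_dec (S t) k) as [Ek|Ek].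
    + replace (t <? k) with true by (symmetry; b2p; lia).
      replace (t <? dist k (0 + 1)) with false by (symmetry; b2p; unfold dist; lia).
      rewrite (soldier_at_left_end n k (S t)), Ek, Nat.eqb_refl
        by (pose proof (fsq_time_ge (n - 1)); lia).
      reflexivity.
    + rewrite <- soldier_step_left_end by lia.
      destruct (Nat.ltb_spec t k); [|reflexivity].
      destruct (Nat.ltb_spec t (dist k (0 + 1))); [reflexivity|unfold dist in *; lia].
  - subst i. replace n with 1 in * by lia. replace k with 0 by lia.
    unfold soldier_at. destruct t; reflexivity.
  - rewrite <- soldier_step_interior by lia.
    replace (i + 1 <? n) with true by (symmetry; b2p; lia).
    reflexivity.
  - rewrite <- soldier_step_interior by lia.
    replace (i + 1 <? n) with false by (symmetry; b2p; lia).
    reflexivity.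
Qed.

Lemma levolve_lform n k t i : k < n -> i < n -> levolve n k t i = lform n k t i.
Proof.
  intros Hk. revert i. induction t as [|t IH]; intros i Hi.
  - cbn [levolve]. unfold lform, soldier_at, dist, lgeneral, lquiet. destruct (Nat.eqb_spec i k).
    + subst i. destruct (Nat.ltb_spec 0 k), (Nat.ltb_spec k (n - 1));
      repeat match goal with |- context [?a <? ?b] => destruct (Nat.ltb_spec a b) end;
      repeat match goal with |- context [?a =? ?b] => destruct (Nat.eqb_spec a b) end;
      try (exfalso; lia); unfold capped; f_equal; try reflexivity; try (f_equal; lia).
    + repeat match goal with |- context [?a <? ?b] => destruct (Nat.ltb_spec a b) end;
      repeat match goal with |- context [?a =? ?b] => destruct (Nat.eqb_spec a b) end;
      rewrite ?Nat.sub_0_l, ?fsq_0; try (exfalso; lia); reflexivity.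
  - cbn [levolve]. rewrite <- lform_step by lia. f_equal.
    + destruct (Nat.eqb_spec i 0); [reflexivity|]. rewrite IH by lia. reflexivity.
    + apply IH; lia.
    + destruct (Nat.ltb_spec (i + 1) n); [|reflexivity]. rewrite IH by lia. reflexivity.
Qed.

Lemma lform_quiet n k t i : k < n -> i < n -> t < dist k i -> lform n k t i = lquiet.
Proof.
  intros. pose proof (fsq_time_ge (n - 1)). unfold lform, lquiet, dist in *.
  replace (t <? k - i + (i - k)) with true by (symmetry; b2p; lia).
  replace (t <? k + i) with true by (symmetry; b2p; lia).
  replace (t <? n - 1 - k + (n - 1 - i)) with true by (symmetry; b2p; lia).
  f_equal. unfold soldier_at. destruct (Nat.ltb_spec t k); [reflexivity|].
  replace (i =? 0) with false by (symmetry; b2p; lia).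
  replace (t <=? k + fsq_time (n - 1)) with true by (symmetry; b2p; lia).
  apply fsq_quiet_cone; lia.
Qed.

Definition matched_time (n k : nat) : nat := k + (n - 1 - k) + Nat.max k (n - 1 - k).

Lemma lform_fires_matched n k i : k <= M -> n - 1 - k <= M -> i < n ->
  lfires (lform n k (matched_time n k) i).
Proof.
  intros. left. unfold lform, matched_time, dist, capped, cap; cbn [clock left_arm right_arm].
  repeat match goal with |- context [?a <? ?b] => destruct (Nat.ltb_spec a b) end;
    try (exfalso; lia).
  do 3 eexists; split; [reflexivity|]; split; [reflexivity|]; split; [reflexivity|]. lia.
Qed.

Lemma lform_silent_matched n k t i : k <= M -> n - 1 - k <= M -> t < matched_time n k ->
  ~ lfires (lform n k t i).
Proof.
  unfold lfires, lform, matched_time, dist, capped, cap; cbn [clock left_arm right_arm soldier].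
  intros Hk Hs Ht [(c & a & b & E1 & E2 & E3 & H1 & H2 & H3)|(_ & [(a & E & Ha)|(b & E & Hb)])].
  - destruct (t <? k - i + (i - k)), (t <? k + i), (t <? n - 1 - k + (n - 1 - i));
      try discriminate.
    injection E1; injection E2; injection E3; intros; lia.
  - destruct (t <? k + i); [discriminate|]. injection E; lia.
  - destruct (t <? n - 1 - k + (n - 1 - i)); [discriminate|]. injection E; lia.
Qed.

Lemma lform_fires_overflow n k i : M < k \/ M < n - 1 - k -> i < n ->
  lfires (lform n k (k + fsq_time (n - 1) + 1) i).
Proof.
  intros Hk Hi. pose proof (fsq_time_ge (n - 1)). right.
  unfold lform, capped, cap; cbn [soldier left_arm right_arm].
  rewrite soldier_at_fired by lia. split; [reflexivity|].
  destruct Hk; [left|right]; eexists;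
    (split; [match goal with |- (if ?c then _ else _) = _ =>
               replace c with false by (symmetry; b2p; lia) end; reflexivity|lia]).
Qed.

Lemma lform_silent_overflow n k t i : M < k \/ M < n - 1 - k -> t <= k + fsq_time (n - 1) ->
  ~ lfires (lform n k t i).
Proof.
  unfold lfires, lform, capped, cap; cbn [clock left_arm right_arm soldier].
  intros Hk Ht [(c & a & b & E1 & E2 & E3 & H1 & H2 & H3)|(HF & _)].
  - destruct (t <? k + i), (t <? n - 1 - k + (n - 1 - i)); try discriminate.
    injection E2; injection E3; intros; lia.
  - apply soldier_at_fired_inv in HF. lia.
Qed.

Definition fire_time (n k : nat) : nat :=
  if (k <=? M) && (n - 1 - k <=? M) then matched_time n k else k + fsq_time (n - 1) + 1.

Lemma levolve_fires n k : k < n ->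
  (forall i, i < n -> lfires (levolve n k (fire_time n k) i)) /\
  (forall t i, t < fire_time n k -> i < n -> ~ lfires (levolve n k t i)).
Proof.
  intros Hk. unfold fire_time.
  destruct (Nat.leb_spec k M), (Nat.leb_spec (n - 1 - k) M); cbn; split; intros;
    rewrite levolve_lform by lia;
    first [ apply lform_fires_matched; lia | apply lform_silent_matched; lia
          | apply lform_fires_overflow; lia | apply lform_silent_overflow; lia ].
Qed.

Lemma lcap_idem s : lcap (lcap s) = lcap s.
Proof.
  destruct s as [a b c d]. unfold lcap, capped; cbn.
  f_equal; [destruct a|destruct b|destruct c]; cbn; f_equal; lia.
Qed.

Lemma lcap_lgeneral hl hr : lcap (lgeneral hl hr) = lgeneral hl hr.
Proof. destruct hl, hr; reflexivity. Qed.

End Line.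

Lemma not_lfires_lquiet M : ~ lfires M lquiet.
Proof. intros [(c & a & b & E & _)|(E & _)]; discriminate. Qed.

Lemma levolve_quiet M n k t i : k < n -> i < n -> t < dist k i -> levolve M n k t i = lquiet.
Proof. intros. rewrite levolve_lform, lform_quiet by lia. reflexivity. Qed.

Lemma fire_time_matched M n k : k <= M -> n - 1 - k <= M -> fire_time M n k = matched_time n k.
Proof.
  intros. unfold fire_time.
  replace ((k <=? M) && (n - 1 - k <=? M)) with true by (symmetry; b2p; lia).
  reflexivity.
Qed.

Lemma matched_time_rev n k : k < n -> matched_time n (n - 1 - k) = matched_time n k.
Proof. intros. unfold matched_time. lia. Qed.

(** * Paths in the plane *)

Inductive dir := East | North | West | South.

Lemma dir_eq_dec (a b : dir) : {a = b} + {a <> b}.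
Proof. decide equality. Defined.

Definition dir_index (d : dir) : nat :=
  match d with East => 0 | North => 1 | West => 2 | South => 3 end.
Definition dvec (d : dir) : pos := eps (dir_index d).
Definition dir_opp (d : dir) : dir :=
  match d with East => West | North => South | West => East | South => North end.
Definition dir_eqb (a b : dir) : bool := Nat.eqb (dir_index a) (dir_index b).
Definition odir_eqb (a b : option dir) : bool :=
  match a, b with None, None => true | Some x, Some y => dir_eqb x y | _, _ => false end.

Lemma dir_eqb_eq a b : dir_eqb a b = true <-> a = b.
Proof. destruct a, b; unfold dir_eqb; simpl; split; intro; congruence. Qed.

Lemma odir_eqb_eq a b : odir_eqb a b = true <-> a = b.
Proof.
  destruct a as [x|], b as [y|]; simpl; try (split; intro; congruence).
  rewrite dir_eqb_eq. split; congruence.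
Qed.

Lemma odir_eqb_refl a : odir_eqb a a = true.
Proof. apply odir_eqb_eq. reflexivity. Qed.

Lemma odir_eqb_neq a b : a <> b -> odir_eqb a b = false.
Proof. intros H. destruct (odir_eqb a b) eqn:E; auto. apply odir_eqb_eq in E. contradiction. Qed.

Lemma pos_eqb_eq p q : pos_eqb p q = true <-> p = q.
Proof.
  destruct p as [a b], q as [c d]; unfold pos_eqb; simpl.
  rewrite andb_true_iff, !Z.eqb_eq. split; [intros [-> ->]; reflexivity|intro H; inversion H; auto].
Qed.

Lemma memb_In L y : memb L y = true <-> In y L.
Proof.
  unfold memb. rewrite existsb_exists. split.
  - intros [x [Hx Hy]]. apply pos_eqb_eq in Hy. subst. exact Hx.
  - intros H. exists y. split; [exact H|]. apply pos_eqb_eq. reflexivity.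
Qed.

Lemma padd_dvec_opp p d : padd (padd p (dvec d)) (dvec (dir_opp d)) = p.
Proof. destruct p as [a b]; destruct d; unfold padd, dvec, eps; simpl; f_equal; lia. Qed.

Lemma padd_dvec_inj p d1 d2 : padd p (dvec d1) = padd p (dvec d2) -> d1 = d2.
Proof.
  destruct p as [a b]; destruct d1, d2; unfold padd, dvec, eps; simpl; intro H;
    inversion H; try reflexivity; lia.
Qed.

Lemma padd_dvec_neq p d : padd p (dvec d) <> p.
Proof.
  destruct p as [a b]; destruct d; unfold padd, dvec, eps; simpl; intro H; inversion H; lia.
Qed.

Definition dir_to (p q : pos) : option dir :=
  if pos_eqb q (padd p (dvec East)) then Some East else
  if pos_eqb q (padd p (dvec North)) then Some North else
  if pos_eqb q (padd p (dvec West)) then Some West else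
  if pos_eqb q (padd p (dvec South)) then Some South else None.

Lemma dir_to_spec p q d : dir_to p q = Some d -> q = padd p (dvec d).
Proof.
  unfold dir_to.
  repeat match goal with |- context [pos_eqb ?a ?b] => destruct (pos_eqb a b) eqn:?E end;
    intro H; inversion H; subst; apply pos_eqb_eq; assumption.
Qed.

Lemma dir_to_padd p d : dir_to p (padd p (dvec d)) = Some d.
Proof.
  unfold dir_to.
  assert (E : forall d', pos_eqb (padd p (dvec d)) (padd p (dvec d')) = dir_eqb d d').
  { intros d'. apply eq_true_iff_eq. rewrite pos_eqb_eq, dir_eqb_eq.
    split; [apply padd_dvec_inj|intros ->; reflexivity]. }
  rewrite !E. destruct d; reflexivity.
Qed.

Lemma adj_dvec p q : adj p q <-> exists d, q = padd p (dvec d).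
Proof.
  split.
  - intros [i [Hi ->]]. destruct i as [|[|[|[|]]]]; try lia.
    + exists East; reflexivity.
    + exists North; reflexivity.
    + exists West; reflexivity.
    + exists South; reflexivity.
  - intros [d ->]. exists (dir_index d). split; [destruct d; simpl; lia|reflexivity].
Qed.

Lemma adj_sym p q : adj p q -> adj q p.
Proof. rewrite !adj_dvec. intros [d ->]. exists (dir_opp d). symmetry. apply padd_dvec_opp. Qed.

Lemma adj_irrefl p : ~ adj p p.
Proof. rewrite adj_dvec. intros [d H]. exact (padd_dvec_neq p d (eq_sym H)). Qed.

Definition node (L : list pos) (i : nat) : pos := nth i L origin.

Definition prev_dir (L : list pos) (i : nat) : option dir :=
  if i =? 0 then None else dir_to (node L i) (node L (i - 1)).
Definition next_dir (L : list pos) (i : nat) : option dir :=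
  if i + 1 <? length L then dir_to (node L i) (node L (i + 1)) else None.

Lemma next_dir_none L i : length L <= i + 1 -> next_dir L i = None.
Proof.
  intros. unfold next_dir. replace (i + 1 <? length L) with false by (symmetry; b2p; lia).
  reflexivity.
Qed.

Lemma prev_dir_spec L i d : prev_dir L i = Some d ->
  1 <= i /\ node L (i - 1) = padd (node L i) (dvec d).
Proof.
  unfold prev_dir. destruct (Nat.eqb_spec i 0); [discriminate|].
  intro H. split; [lia|]. apply dir_to_spec; auto.
Qed.

Lemma next_dir_spec L i d : next_dir L i = Some d ->
  i + 1 < length L /\ node L (i + 1) = padd (node L i) (dvec d).
Proof.
  unfold next_dir. destruct (Nat.ltb_spec (i + 1) (length L)); [|discriminate].
  intro Hd. split; [lia|]. apply dir_to_spec; exact Hd.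
Qed.

Section Configuration.

Variables (k : nat) (L : list pos).
Hypothesis HC : is_config k L.

Lemma general_lt : k < length L.
Proof. apply HC. Qed.

Lemma node_general : node L k = origin.
Proof. apply HC. Qed.

Lemma config_node_inj i j : i < length L -> j < length L -> node L i = node L j -> i = j.
Proof. destruct HC as (_ & _ & _ & Hnd & _). intros. eapply NoDup_nth; eauto. Qed.

Lemma config_In y : In y L <-> exists j, j < length L /\ node L j = y.
Proof.
  split.
  - intro H. destruct (In_nth L y origin H) as [j [Hj E]]. exists j; auto.
  - intros [j [Hj <-]]. apply nth_In. exact Hj.
Qed.

Lemma config_adj_index i j : i < length L -> j < length L ->
  adj (node L i) (node L j) -> j = S i \/ i = S j.
Proof.
  destruct HC as (_ & _ & _ & _ & Hna). intros Hi Hj Ha.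
  destruct (Nat.lt_total i j) as [H|[H|H]].
  - destruct (Nat.eq_dec j (S i)); [auto|]. exfalso. apply (Hna i j); auto; lia.
  - subst. exfalso. exact (adj_irrefl _ Ha).
  - destruct (Nat.eq_dec i (S j)); [auto|]. exfalso.
    apply (Hna j i); auto; [lia|]. apply adj_sym; auto.
Qed.

Lemma config_adj_next i : i + 1 < length L -> adj (node L i) (node L (i + 1)).
Proof. destruct HC as (_ & _ & Ha & _). intros. rewrite Nat.add_1_r. apply Ha. lia. Qed.

Lemma prev_dir_some i : 1 <= i < length L ->
  exists d, prev_dir L i = Some d /\ node L (i - 1) = padd (node L i) (dvec d).
Proof.
  intros. unfold prev_dir. replace (i =? 0) with false by (symmetry; b2p; lia).
  assert (Ha : adj (node L i) (node L (i - 1))).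
  { pose proof (config_adj_next (i - 1) ltac:(lia)) as Ha0.
    rewrite Nat.sub_add in Ha0 by lia. apply adj_sym, Ha0. }
  apply adj_dvec in Ha. destruct Ha as [d Hd]. exists d. rewrite Hd, dir_to_padd. auto.
Qed.

Lemma next_dir_some i : i + 1 < length L ->
  exists d, next_dir L i = Some d /\ node L (i + 1) = padd (node L i) (dvec d).
Proof.
  intros. unfold next_dir. replace (i + 1 <? length L) with true by (symmetry; b2p; lia).
  assert (Ha := config_adj_next i H).
  apply adj_dvec in Ha. destruct Ha as [d Hd]. exists d. rewrite Hd, dir_to_padd. auto.
Qed.

Lemma config_neighbour_dir i d : i < length L ->
  (memb L (padd (node L i) (dvec d)) = true <-> prev_dir L i = Some d \/ next_dir L i = Some d).
Proof.
  intros Hi. rewrite memb_In, config_In. split.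
  - intros [j [Hj E]].
    assert (Ha : adj (node L i) (node L j)) by (rewrite E; apply adj_dvec; eauto).
    destruct (config_adj_index i j Hi Hj Ha) as [->| ->].
    + right. destruct (next_dir_some i ltac:(lia)) as [d' [H1 H2]].
      rewrite Nat.add_1_r, E in H2. apply padd_dvec_inj in H2. subst; auto.
    + left. destruct (prev_dir_some (S j) ltac:(lia)) as [d' [H1 H2]].
      rewrite Nat.sub_succ, Nat.sub_0_r, E in H2. apply padd_dvec_inj in H2. subst; auto.
  - intros [H|H].
    + apply (prev_dir_spec L) in H. destruct H as [H1 H2]. exists (i - 1). split; [lia|auto].
    + apply (next_dir_spec L) in H. destruct H as [H1 H2]. exists (i + 1). split; [lia|auto].
Qed.

Lemma config_neighbour_index i d : i < length L -> memb L (padd (node L i) (dvec d)) = true ->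
  (1 <= i /\ padd (node L i) (dvec d) = node L (i - 1)) \/
  (i + 1 < length L /\ padd (node L i) (dvec d) = node L (i + 1)).
Proof.
  intros Hi E. apply (config_neighbour_dir i d Hi) in E. destruct E as [E|E].
  - apply (prev_dir_spec L) in E. destruct E. left; auto.
  - apply (next_dir_spec L) in E. destruct E. right; auto.
Qed.

Lemma prev_next_dir_neq i d : prev_dir L i = Some d -> next_dir L i <> Some d.
Proof.
  intros H1 H2. apply (prev_dir_spec L) in H1. apply (next_dir_spec L) in H2.
  destruct H1 as [A1 B1], H2 as [A2 B2]. rewrite <- B2 in B1.
  apply config_node_inj in B1; lia.
Qed.

Lemma next_dir_of_prev i d : prev_dir L i = Some d -> i < length L ->
  next_dir L (i - 1) = Some (dir_opp d).
Proof.
  intros H Hi. destruct (prev_dir_spec L i d H) as [H1 H2].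
  destruct (next_dir_some (i - 1) ltac:(lia)) as [d' [E1 E2]].
  replace (i - 1 + 1) with i in E2 by lia. rewrite E1. f_equal.
  rewrite H2, <- (padd_dvec_opp (node L i) d) in E2 at 1.
  apply padd_dvec_inj in E2. auto.
Qed.

Lemma prev_dir_of_next i d : next_dir L i = Some d -> prev_dir L (i + 1) = Some (dir_opp d).
Proof.
  intros H. destruct (next_dir_spec L i d H) as [H1 H2].
  destruct (prev_dir_some (i + 1) ltac:(lia)) as [d' [E1 E2]].
  replace (i + 1 - 1) with i in E2 by lia. rewrite E1. f_equal.
  rewrite H2, <- (padd_dvec_opp (node L i) d) in E2 at 1.
  apply padd_dvec_inj in E2. auto.
Qed.

End Configuration.

(** * The automaton on paths *)

(* A node remembers in which directions its predecessor and successor on the path lie,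
   and runs the line automaton along the path. *)
Inductive pstate := PQuiet | PActive (prev next : option dir) (x : lstate).

Definition is_active (o : option pstate) : bool :=
  match o with Some (PActive _ _ _) => true | _ => false end.
Definition is_some {A} (o : option A) : bool := match o with Some _ => true | None => false end.

Definition first_active (nb : dir -> option pstate) : option dir :=
  if is_active (nb East) then Some East else if is_active (nb North) then Some North else
  if is_active (nb West) then Some West else if is_active (nb South) then Some South else None.

Definition other_neighbour (nb : dir -> option pstate) (d : dir) : option dir :=
  if negb (dir_eqb d East) && is_some (nb East) then Some East else
  if negb (dir_eqb d North) && is_some (nb North) then Some North else
  if negb (dir_eqb d West) && is_some (nb West) then Some West else
  if negb (dir_eqb d South) && is_some (nb South) then Some South else None.

Definition line_view (s : pstate) : lstate :=
  match s with PQuiet => lquiet | PActive _ _ y => y end.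
Definition view_along (nb : dir -> option pstate) (o : option dir) : option lstate :=
  match o with None => None | Some d => option_map line_view (nb d) end.

(* A node woken up by its neighbour [d] is the successor of [d] iff [d] says so. *)
Definition orient (nb : dir -> option pstate) (d : dir) : option dir * option dir :=
  match nb d with
  | Some (PActive _ next' _) =>
      if odir_eqb next' (Some (dir_opp d)) then (Some d, other_neighbour nb d)
      else (other_neighbour nb d, Some d)
  | _ => (None, None)
  end.

Definition neighbourhood (a0 a1 a2 a3 : option pstate) (d : dir) : option pstate :=
  match d with East => a0 | North => a1 | West => a2 | South => a3 end.

(* The general cannot tell its predecessor from its successor: it orders its neighbour
   directions arbitrarily, which amounts to running the automaton on [C] or on its reversal. *)
Definition split_dirs (b : bool * bool * bool * bool) : option dir * option dir :=
  let '(b0, b1, b2, b3) := b in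
  let l := (if b0 then [East] else []) ++ (if b1 then [North] else []) ++
           (if b2 then [West] else []) ++ (if b3 then [South] else []) in
  match l with [] => (None, None) | [d] => (None, Some d) | d1 :: d2 :: _ => (Some d1, Some d2) end.

Definition bc_code (b : bool * bool * bool * bool) : nat :=
  let '(b0, b1, b2, b3) := b in
  (if b0 then 1 else 0) + (if b1 then 2 else 0) + (if b2 then 4 else 0) + (if b3 then 8 else 0).
Definition bc_decode (j : nat) : bool * bool * bool * bool :=
  (Nat.odd j, Nat.odd (j / 2), Nat.odd (j / 4), Nat.odd (j / 8)).

Lemma bc_decode_code b : bc_decode (bc_code b) = b.
Proof. destruct b as [[[[] []] []] []]; reflexivity. Qed.

Lemma bc_code_lt b : bc_code b < 16.
Proof. destruct b as [[[[] []] []] []]; simpl; lia. Qed.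

Fixpoint sig_list {T} (p : T -> bool) (l : list T) : list {x | p x = true} :=
  match l with
  | [] => []
  | x :: r => (if p x as b return p x = b -> list {x | p x = true}
               then fun H => [exist _ x H] else fun _ => []) eq_refl ++ sig_list p r
  end.

Lemma sig_list_complete {T} (p : T -> bool) l (y : {x | p x = true}) :
  In (proj1_sig y) l -> In y (sig_list p l).
Proof.
  induction l as [|x r IH]; simpl; [auto|]. intros [E|H]; apply in_or_app; [left|auto].
  destruct y as [y Hy]. simpl in E. subst x.
  generalize (eq_refl (p y)). generalize (p y) at 2 3. intros [] e; [|congruence].
  left. f_equal. apply UIP_dec, bool_dec.
Qed.

Section Automaton.

Variable M : nat.

Definition counter_ok (o : option nat) : bool :=
  match o with None => true | Some v => v <=? cap M end.
Definition pstate_ok (s : pstate) : bool :=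
  match s with
  | PQuiet => true
  | PActive _ _ x => counter_ok (clock x) && counter_ok (left_arm x) && counter_ok (right_arm x)
  end.
Definition pcap (s : pstate) : pstate :=
  match s with PQuiet => PQuiet | PActive a b x => PActive a b (lcap M x) end.

Lemma pcap_ok s : pstate_ok (pcap s) = true.
Proof.
  destruct s as [|a b [c l r f]]; [reflexivity|]. simpl. unfold capped.
  destruct c, l, r; simpl; rewrite ?andb_true_iff; repeat split; apply Nat.leb_le; lia.
Qed.

Definition astate : Type := {s : pstate | pstate_ok s = true}.
Definition aval (s : astate) : pstate := proj1_sig s.
Definition mk_astate (s : pstate) : astate := exist _ (pcap s) (pcap_ok s).

Lemma astate_eq (a b : astate) : aval a = aval b -> a = b.
Proof.
  destruct a as [a Ha], b as [b Hb]. unfold aval; simpl. intros ->. f_equal.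
  apply UIP_dec, bool_dec.
Qed.

Definition pstep (c : pstate) (nb : dir -> option pstate) : pstate :=
  match c with
  | PActive prev next x => PActive prev next (lstep M (view_along nb prev) x (view_along nb next))
  | PQuiet =>
    match first_active nb with
    | None => PQuiet
    | Some d => let (prev, next) := orient nb d in
                PActive prev next (lstep M (view_along nb prev) lquiet (view_along nb next))
    end
  end.

Definition astep (c : astate) (a0 a1 a2 a3 : option astate) : astate :=
  mk_astate (pstep (aval c) (neighbourhood (option_map aval a0) (option_map aval a1)
                                           (option_map aval a2) (option_map aval a3))).

Definition pgeneral (j : nat) : pstate :=
  let (prev, next) := split_dirs (bc_decode j) in
  PActive prev next (lgeneral (is_some prev) (is_some next)).

Definition afires (s : astate) : Prop :=
  match aval s with PQuiet => False | PActive _ _ x => lfires M x end.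

Lemma not_afires_quiet : ~ afires (mk_astate PQuiet).
Proof. unfold afires; simpl; auto. Qed.

Lemma astep_quiet_stable : forall a0 a1 a2 a3 : option astate,
  (a0 = None \/ a0 = Some (mk_astate PQuiet)) -> (a1 = None \/ a1 = Some (mk_astate PQuiet)) ->
  (a2 = None \/ a2 = Some (mk_astate PQuiet)) -> (a3 = None \/ a3 = Some (mk_astate PQuiet)) ->
  astep (mk_astate PQuiet) a0 a1 a2 a3 = mk_astate PQuiet.
Proof.
  intros a0 a1 a2 a3 H0 H1 H2 H3. apply astate_eq. unfold astep, mk_astate, aval; simpl.
  destruct H0 as [->| ->], H1 as [->| ->], H2 as [->| ->], H3 as [->| ->]; reflexivity.
Qed.

Definition all_phases : list (option phase) := [None; Some Ph0; Some Ph1; Some Ph2].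
Definition all_cells : list cell :=
  General :: NewGeneral :: Fired ::
  flat_map (fun a => flat_map (fun b => flat_map (fun c =>
    map (fun d => Soldier a b c d) all_phases) all_phases) [true; false]) [true; false].
Definition all_counters : list (option nat) := None :: map Some (seq 0 (S (cap M))).
Definition all_lstates : list lstate :=
  flat_map (fun a => flat_map (fun b => flat_map (fun c =>
    map (fun d => LState a b c d) all_cells) all_counters) all_counters) all_counters.
Definition all_odirs : list (option dir) := [None; Some East; Some North; Some West; Some South].
Definition all_pstates : list pstate :=
  PQuiet :: flat_map (fun a => flat_map (fun b =>
    map (fun x => PActive a b x) all_lstates) all_odirs) all_odirs.

Lemma all_cells_complete c : In c all_cells.
Proof.
  assert (Hph : forall o, In o all_phases) by (intros [[]|]; simpl; auto 6).
  assert (Hb : forall b : bool, In b [true; false]) by (intros []; simpl; auto).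
  unfold all_cells. destruct c as [a b c d| | |];
    [do 3 right|left; reflexivity|right; left; reflexivity|right; right; left; reflexivity].
  apply in_flat_map. exists a. split; [apply Hb|].
  apply in_flat_map. exists b. split; [apply Hb|].
  apply in_flat_map. exists c. split; [apply Hph|].
  apply in_map, Hph.
Qed.

Lemma all_pstates_complete s : pstate_ok s = true -> In s all_pstates.
Proof.
  assert (Hn : forall o, counter_ok o = true -> In o all_counters).
  { intros [v|] H; [|apply in_eq]. apply in_cons, in_map, in_seq.
    simpl in H. apply Nat.leb_le in H. lia. }
  assert (Hd : forall o, In o all_odirs) by (intros [[]|]; simpl; auto 6).
  unfold all_pstates. destruct s as [|a b [c l r f]]; [intros; left; reflexivity|].
  cbn [pstate_ok clock left_arm right_arm]. rewrite !andb_true_iff.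
  intros [[Hc Hl] Hr]. right.
  apply in_flat_map. exists a. split; [apply Hd|].
  apply in_flat_map. exists b. split; [apply Hd|].
  apply in_map. unfold all_lstates.
  apply in_flat_map. exists c. split; [apply Hn; auto|].
  apply in_flat_map. exists l. split; [apply Hn; auto|].
  apply in_flat_map. exists r. split; [apply Hn; auto|].
  apply in_map, all_cells_complete.
Qed.

Lemma astate_finite : exists l : list astate, forall x, In x l.
Proof.
  exists (sig_list pstate_ok all_pstates). intros y.
  apply sig_list_complete, all_pstates_complete. destruct y; auto.
Qed.

Definition path_automaton : automaton :=
  Build_automaton astate astate_finite (mk_astate PQuiet) 16 (fun j => mk_astate (pgeneral j))
    afires not_afires_quiet bc_code bc_code_lt astep astep_quiet_stable.

End Automaton.

Lemma first_active_spec nb d : (forall d', is_active (nb d') = true <-> d' = d) ->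
  first_active nb = Some d.
Proof.
  intros H. unfold first_active.
  assert (E : forall d', is_active (nb d') = dir_eqb d' d).
  { intros d'. apply eq_true_iff_eq. rewrite H, dir_eqb_eq. reflexivity. }
  rewrite !E. destruct d; reflexivity.
Qed.

Lemma first_active_none nb : (forall d', is_active (nb d') = false) -> first_active nb = None.
Proof. intros H. unfold first_active. rewrite !H. reflexivity. Qed.

Lemma other_neighbour_spec nb d e :
  (forall d', is_some (nb d') = true <-> d' = d \/ Some d' = e) -> e <> Some d ->
  other_neighbour nb d = e.
Proof.
  intros H He. unfold other_neighbour.
  assert (E : forall d', negb (dir_eqb d d') && is_some (nb d') = odir_eqb e (Some d')).
  { intros d'. destruct (dir_eqb d d') eqn:Ed; cbn [negb andb].
    - apply dir_eqb_eq in Ed. subst d'. symmetry. apply odir_eqb_neq. congruence.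
    - apply eq_true_iff_eq. rewrite H, odir_eqb_eq. split; [|auto].
      intros [-> | ->]; [|reflexivity].
      rewrite (proj2 (dir_eqb_eq d d) eq_refl) in Ed. discriminate. }
  rewrite !E. destruct e as [[]|]; reflexivity.
Qed.

Lemma state_0 (A : automaton) L x : state A L 0 x = init A L x.
Proof. reflexivity. Qed.

Lemma state_S (A : automaton) L t x : state A L (S t) x =
  delta A (state A L t x) (nbr A L (state A L t) (padd x (eps 0)))
    (nbr A L (state A L t) (padd x (eps 1))) (nbr A L (state A L t) (padd x (eps 2)))
    (nbr A L (state A L t) (padd x (eps 3))).
Proof. reflexivity. Qed.

Section Simulation.

Variables (M k : nat) (L : list pos).
Hypothesis HC : is_config k L.

Definition sim_state (t i : nat) : pstate :=
  if t <? dist k i then PQuiet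
  else PActive (prev_dir L i) (next_dir L i) (levolve M (length L) k t i).

Definition sim_nbhd (t i : nat) (d : dir) : option pstate :=
  if odir_eqb (prev_dir L i) (Some d) then Some (sim_state t (i - 1))
  else if odir_eqb (next_dir L i) (Some d) then Some (sim_state t (i + 1)) else None.

Lemma sim_state_quiet t i : t < dist k i -> sim_state t i = PQuiet.
Proof.
  intros. unfold sim_state. replace (t <? dist k i) with true by (symmetry; b2p; lia).
  reflexivity.
Qed.

Lemma sim_state_active t i : dist k i <= t ->
  sim_state t i = PActive (prev_dir L i) (next_dir L i) (levolve M (length L) k t i).
Proof.
  intros. unfold sim_state. replace (t <? dist k i) with false by (symmetry; b2p; lia).
  reflexivity.
Qed.

Lemma line_view_sim_state t i : i < length L ->
  line_view (sim_state t i) = levolve M (length L) k t i.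
Proof.
  intros Hi. unfold sim_state. destruct (Nat.ltb_spec t (dist k i)); [|reflexivity].
  symmetry. apply levolve_quiet; [apply (general_lt k L HC)|exact Hi|lia].
Qed.

Lemma view_along_prev t i : i < length L ->
  view_along (sim_nbhd t i) (prev_dir L i) =
  if i =? 0 then None else Some (levolve M (length L) k t (i - 1)).
Proof.
  intros Hi. destruct (Nat.eqb_spec i 0) as [->|H0]; [reflexivity|].
  destruct (prev_dir_some k L HC i ltac:(lia)) as [d [E _]]. rewrite E. simpl.
  unfold sim_nbhd. rewrite E, odir_eqb_refl. simpl. rewrite line_view_sim_state by lia. reflexivity.
Qed.

Lemma view_along_next t i : i < length L ->
  view_along (sim_nbhd t i) (next_dir L i) =
  if i + 1 <? length L then Some (levolve M (length L) k t (i + 1)) else None.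
Proof.
  intros Hi. destruct (Nat.ltb_spec (i + 1) (length L)) as [H1|H1].
  - destruct (next_dir_some k L HC i H1) as [d [E _]]. rewrite E. simpl.
    unfold sim_nbhd. rewrite E, odir_eqb_refl.
    replace (odir_eqb (prev_dir L i) (Some d)) with false.
    + simpl. rewrite line_view_sim_state by lia. reflexivity.
    + symmetry. apply odir_eqb_neq. intro E2. exact (prev_next_dir_neq k L HC i d E2 E).
  - rewrite next_dir_none by lia. reflexivity.
Qed.

Lemma sim_nbhd_some t i d :
  is_some (sim_nbhd t i d) = true <-> prev_dir L i = Some d \/ next_dir L i = Some d.
Proof.
  unfold sim_nbhd. rewrite <- !odir_eqb_eq.
  destruct (odir_eqb (prev_dir L i) (Some d)), (odir_eqb (next_dir L i) (Some d));
    simpl; intuition discriminate.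
Qed.

Lemma sim_nbhd_quiet t i d : (1 <= i -> t < dist k (i - 1)) -> t < dist k (i + 1) ->
  is_active (sim_nbhd t i d) = false.
Proof.
  intros H1 H2. unfold sim_nbhd.
  destruct (odir_eqb (prev_dir L i) (Some d)) eqn:E1.
  - apply odir_eqb_eq, prev_dir_spec in E1. rewrite sim_state_quiet by (apply H1; lia).
    reflexivity.
  - destruct (odir_eqb (next_dir L i) (Some d)); [|reflexivity].
    rewrite sim_state_quiet by exact H2. reflexivity.
Qed.

Lemma sim_wake_from_prev t i : k < i < length L -> dist k i = S t ->
  exists d, first_active (sim_nbhd t i) = Some d /\
            orient (sim_nbhd t i) d = (prev_dir L i, next_dir L i).
Proof.
  intros Hi Hd. unfold dist in Hd.
  destruct (prev_dir_some k L HC i ltac:(lia)) as [d [Ed _]]. exists d.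
  assert (Nd : sim_nbhd t i d = Some (sim_state t (i - 1)))
    by (unfold sim_nbhd; rewrite Ed, odir_eqb_refl; reflexivity).
  assert (Nrest : forall d', d' <> d -> is_active (sim_nbhd t i d') = false).
  { intros d' Hne. unfold sim_nbhd.
    replace (odir_eqb (prev_dir L i) (Some d')) with false
      by (symmetry; apply odir_eqb_neq; congruence).
    destruct (odir_eqb (next_dir L i) (Some d')); [|reflexivity].
    rewrite sim_state_quiet by (unfold dist; lia). reflexivity. }
  split.
  - apply first_active_spec. intros d'. split; [|intros ->; rewrite Nd, sim_state_active; auto;
      unfold dist; lia].
    intros Ha. destruct (dir_eq_dec d' d) as [->|Hne]; [reflexivity|].
    rewrite Nrest in Ha by exact Hne. discriminate.
  - unfold orient. rewrite Nd, sim_state_active by (unfold dist; lia).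
    rewrite (next_dir_of_prev k L HC i d Ed ltac:(lia)), odir_eqb_refl, Ed.
    f_equal. apply other_neighbour_spec.
    + intros d'. rewrite sim_nbhd_some, Ed. intuition congruence.
    + intros E. exact (prev_next_dir_neq k L HC i d Ed E).
Qed.

Lemma sim_wake_from_next t i : i < k -> dist k i = S t ->
  exists d, first_active (sim_nbhd t i) = Some d /\
            orient (sim_nbhd t i) d = (prev_dir L i, next_dir L i).
Proof.
  intros Hi Hd. unfold dist in Hd. pose proof (general_lt k L HC).
  destruct (next_dir_some k L HC i ltac:(lia)) as [d [Ed _]]. exists d.
  assert (Hpd : odir_eqb (prev_dir L i) (Some d) = false)
    by (apply odir_eqb_neq; intro E; exact (prev_next_dir_neq k L HC i d E Ed)).
  assert (Nd : sim_nbhd t i d = Some (sim_state t (i + 1)))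
    by (unfold sim_nbhd; rewrite Hpd, Ed, odir_eqb_refl; reflexivity).
  assert (Nrest : forall d', d' <> d -> is_active (sim_nbhd t i d') = false).
  { intros d' Hne. unfold sim_nbhd.
    replace (odir_eqb (next_dir L i) (Some d')) with false
      by (symmetry; apply odir_eqb_neq; congruence).
    destruct (odir_eqb (prev_dir L i) (Some d')); [|reflexivity].
    rewrite sim_state_quiet by (unfold dist; lia). reflexivity. }
  split.
  - apply first_active_spec. intros d'. split; [|intros ->; rewrite Nd, sim_state_active; auto;
      unfold dist; lia].
    intros Ha. destruct (dir_eq_dec d' d) as [->|Hne]; [reflexivity|].
    rewrite Nrest in Ha by exact Hne. discriminate.
  - assert (Ep := prev_dir_of_next k L HC i d Ed).
    unfold orient. rewrite Nd, sim_state_active by (unfold dist; lia).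
    rewrite odir_eqb_neq by (intro E; exact (prev_next_dir_neq k L HC (i + 1) _ Ep E)).
    rewrite Ed. f_equal. apply other_neighbour_spec.
    + intros d'. rewrite sim_nbhd_some, Ed. intuition congruence.
    + intros E. exact (prev_next_dir_neq k L HC i d E Ed).
Qed.

Lemma pcap_sim_step t i : i < length L ->
  pcap M (PActive (prev_dir L i) (next_dir L i)
    (lstep M (view_along (sim_nbhd t i) (prev_dir L i)) (levolve M (length L) k t i)
             (view_along (sim_nbhd t i) (next_dir L i))))
  = PActive (prev_dir L i) (next_dir L i) (levolve M (length L) k (S t) i).
Proof.
  intros Hi. rewrite view_along_prev, view_along_next by exact Hi.
  cbn [pcap levolve]. unfold lstep. rewrite lcap_idem. reflexivity.
Qed.

Lemma pstep_sim_state t i : i < length L ->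
  pcap M (pstep M (sim_state t i) (sim_nbhd t i)) = sim_state (S t) i.
Proof.
  intros Hi. pose proof (general_lt k L HC).
  destruct (Nat.lt_ge_cases t (dist k i)) as [Ht|Ht].
  - rewrite sim_state_quiet by exact Ht. cbn [pstep].
    destruct (Nat.lt_ge_cases (S t) (dist k i)) as [Ht2|Ht2].
    + rewrite first_active_none, sim_state_quiet by
        (exact Ht2 || (intros; apply sim_nbhd_quiet; unfold dist in *; lia)).
      reflexivity.
    + assert (Hwake : exists d, first_active (sim_nbhd t i) = Some d /\
                      orient (sim_nbhd t i) d = (prev_dir L i, next_dir L i)).
      { unfold dist in *. destruct (Nat.lt_ge_cases k i).
        - apply sim_wake_from_prev; unfold dist; lia.
        - apply sim_wake_from_next; unfold dist; lia. }
      destruct Hwake as [d [E1 E2]]. rewrite E1, E2.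
      rewrite <- (levolve_quiet M (length L) k t i), pcap_sim_step, sim_state_active by lia.
      reflexivity.
  - rewrite sim_state_active by exact Ht. cbn [pstep].
    rewrite pcap_sim_step, sim_state_active by lia. reflexivity.
Qed.

Lemma nbr_sim_nbhd t i d : i < length L ->
  (forall j, j < length L -> aval M (state (path_automaton M) L t (node L j)) = sim_state t j) ->
  option_map (aval M) (nbr (path_automaton M) L (state (path_automaton M) L t)
                           (padd (node L i) (dvec d))) = sim_nbhd t i d.
Proof.
  intros Hi IH. unfold nbr, sim_nbhd.
  destruct (odir_eqb (prev_dir L i) (Some d)) eqn:E1;
    [|destruct (odir_eqb (next_dir L i) (Some d)) eqn:E2].
  - apply odir_eqb_eq in E1. destruct (prev_dir_spec L i d E1) as [H1 H2].
    replace (memb L _) with true by (symmetry; apply (config_neighbour_dir k L HC i d Hi); auto).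
    rewrite <- H2. cbn. rewrite IH by lia. reflexivity.
  - apply odir_eqb_eq in E2. destruct (next_dir_spec L i d E2) as [H1 H2].
    replace (memb L _) with true by (symmetry; apply (config_neighbour_dir k L HC i d Hi); auto).
    rewrite <- H2. cbn. rewrite IH by lia. reflexivity.
  - replace (memb L _) with false; [reflexivity|]. symmetry. apply not_true_iff_false.
    rewrite (config_neighbour_dir k L HC i d Hi), <- !odir_eqb_eq, E1, E2. intuition discriminate.
Qed.

Lemma is_some_prev_dir : is_some (prev_dir L k) = (0 <? k).
Proof.
  destruct (Nat.eqb_spec k 0) as [->|H]; [reflexivity|].
  destruct (prev_dir_some k L HC k ltac:(pose proof (general_lt k L HC); lia)) as [d [E _]].
  rewrite E. symmetry. b2p. lia.
Qed.

Lemma is_some_next_dir : is_some (next_dir L k) = (k <? length L - 1).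
Proof.
  pose proof (general_lt k L HC). destruct (Nat.ltb_spec (k + 1) (length L)) as [H1|H1].
  - destruct (next_dir_some k L HC k H1) as [d [E _]]. rewrite E. symmetry. b2p. lia.
  - rewrite next_dir_none by lia. symmetry. b2p. lia.
Qed.

Hypothesis Horient : split_dirs (bc L origin) = (prev_dir L k, next_dir L k).

Lemma state_sim t : forall i, i < length L ->
  aval M (state (path_automaton M) L t (node L i)) = sim_state t i.
Proof.
  pose proof (general_lt k L HC) as Hk.
  induction t as [|t IH]; intros i Hi.
  - rewrite state_0. unfold init. destruct (Nat.eq_dec i k) as [->|Hne].
    + rewrite (node_general k L HC), (proj2 (pos_eqb_eq origin origin) eq_refl).
      cbn [Gen tau path_automaton]. unfold aval, mk_astate, pgeneral; cbn [proj1_sig].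
      rewrite bc_decode_code, Horient, is_some_prev_dir, is_some_next_dir.
      cbn [pcap]. rewrite lcap_lgeneral, sim_state_active by (unfold dist; lia).
      cbn [levolve]. rewrite Nat.eqb_refl. reflexivity.
    + replace (pos_eqb (node L i) origin) with false.
      * rewrite sim_state_quiet by (unfold dist; lia). reflexivity.
      * symmetry. apply not_true_iff_false. rewrite pos_eqb_eq, <- (node_general k L HC).
        intro E. apply (config_node_inj k L HC) in E; auto.
  - rewrite state_S. change (delta (path_automaton M)) with (astep M). unfold astep at 1.
    change (aval M (mk_astate M ?s)) with (pcap M s).
    rewrite IH by exact Hi.
    replace (neighbourhood _ _ _ _) with (sim_nbhd t i).
    + apply pstep_sim_state. exact Hi.
    + apply functional_extensionality. intros d. symmetry.
      destruct d; [exact (nbr_sim_nbhd t i East Hi IH)|exact (nbr_sim_nbhd t i North Hi IH)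
        |exact (nbr_sim_nbhd t i West Hi IH)|exact (nbr_sim_nbhd t i South Hi IH)].
Qed.

Lemma afires_iff t i : i < length L ->
  Fire (path_automaton M) (state (path_automaton M) L t (node L i)) <->
  lfires M (levolve M (length L) k t i).
Proof.
  intros Hi. cbn [Fire path_automaton]. unfold afires. rewrite state_sim by exact Hi.
  unfold sim_state. destruct (Nat.ltb_spec t (dist k i)); [|reflexivity].
  rewrite levolve_quiet by (apply (general_lt k L HC) || lia).
  split; [tauto|]. apply not_lfires_lquiet.
Qed.

Lemma fires_oriented : fires_at (path_automaton M) L (fire_time M (length L) k).
Proof.
  destruct (levolve_fires M (length L) k (general_lt k L HC)) as [F1 F2].
  split; [intros t' Ht' x Hx|intros x Hx];
    apply (config_In L) in Hx; destruct Hx as [j [Hj <-]]; rewrite afires_iff by exact Hj; auto.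
Qed.

End Simulation.

(** * Orientation and the upper bound *)

Lemma memb_rev L y : memb (rev L) y = memb L y.
Proof. apply eq_true_iff_eq. rewrite !memb_In. symmetry. apply in_rev. Qed.

Lemma bc_rev L p : bc (rev L) p = bc L p.
Proof. unfold bc. rewrite !memb_rev. reflexivity. Qed.

Lemma state_rev (A : automaton) L t x : state A (rev L) t x = state A L t x.
Proof.
  revert x. induction t as [|t IH]; intros x.
  - rewrite !state_0. unfold init. rewrite bc_rev. reflexivity.
  - rewrite !state_S. unfold nbr. rewrite !memb_rev, !IH. reflexivity.
Qed.

Lemma fires_rev (A : automaton) L t : fires_at A (rev L) t <-> fires_at A L t.
Proof.
  unfold fires_at. setoid_rewrite state_rev. setoid_rewrite <- in_rev. reflexivity.
Qed.

Lemma node_rev L i : i < length L -> node (rev L) i = node L (length L - 1 - i).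
Proof. intros H. unfold node. rewrite rev_nth by lia. f_equal. lia. Qed.

Lemma is_config_rev k L : is_config k L -> is_config (length L - 1 - k) (rev L).
Proof.
  intros HC. pose proof (general_lt k L HC) as Hk.
  destruct HC as (H1 & H2 & H3 & H4 & H5).
  assert (E : forall i, i < length L -> nth i (rev L) origin = node L (length L - 1 - i))
    by (intros; apply node_rev; assumption).
  split; [|split; [|split; [|split]]].
  - rewrite length_rev. lia.
  - rewrite E by lia. unfold node. replace (length L - 1 - (length L - 1 - k)) with k by lia.
    exact H2.
  - intros i Hi. rewrite length_rev in Hi. rewrite !E by lia. apply adj_sym.
    replace (length L - 1 - i) with (S (length L - 1 - S i)) by lia. apply H3. lia.
  - apply NoDup_rev. exact H4.
  - intros i j Hi Hj Hij. rewrite length_rev in Hi, Hj. rewrite !E by lia. intro Ha.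
    apply (H5 (length L - 1 - j) (length L - 1 - i)); try lia. apply adj_sym. exact Ha.
Qed.

Lemma prev_dir_rev k L : k < length L -> prev_dir (rev L) (length L - 1 - k) = next_dir L k.
Proof.
  intros Hk. unfold prev_dir, next_dir.
  destruct (Nat.eqb_spec (length L - 1 - k) 0).
  - replace (k + 1 <? length L) with false by (symmetry; b2p; lia). reflexivity.
  - replace (k + 1 <? length L) with true by (symmetry; b2p; lia).
    rewrite !node_rev by lia. f_equal; f_equal; lia.
Qed.

Lemma next_dir_rev k L : k < length L -> next_dir (rev L) (length L - 1 - k) = prev_dir L k.
Proof.
  intros Hk. unfold prev_dir, next_dir. rewrite length_rev.
  destruct (Nat.eqb_spec k 0).
  - replace (length L - 1 - k + 1 <? length L) with false by (symmetry; b2p; lia). reflexivity.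
  - replace (length L - 1 - k + 1 <? length L) with true by (symmetry; b2p; lia).
    rewrite !node_rev by lia. f_equal; f_equal; lia.
Qed.

Lemma split_dirs_pair (a b : option dir) : (forall d, a = Some d -> b <> Some d) ->
  let f d := odir_eqb a (Some d) || odir_eqb b (Some d) in
  split_dirs (f East, f North, f West, f South) = (a, b) \/
  split_dirs (f East, f North, f West, f South) = (b, a).
Proof.
  intros H f. unfold f. destruct a as [[]|], b as [[]|]; cbn; auto;
    exfalso; eapply H; reflexivity.
Qed.

Lemma bc_general k L : is_config k L ->
  bc L origin =
    (odir_eqb (prev_dir L k) (Some East) || odir_eqb (next_dir L k) (Some East),
     odir_eqb (prev_dir L k) (Some North) || odir_eqb (next_dir L k) (Some North),
     odir_eqb (prev_dir L k) (Some West) || odir_eqb (next_dir L k) (Some West),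
     odir_eqb (prev_dir L k) (Some South) || odir_eqb (next_dir L k) (Some South)).
Proof.
  intros HC. unfold bc. rewrite <- (node_general k L HC).
  assert (G : forall d, memb L (padd (node L k) (dvec d)) =
                        odir_eqb (prev_dir L k) (Some d) || odir_eqb (next_dir L k) (Some d)).
  { intros d. apply eq_true_iff_eq.
    rewrite (config_neighbour_dir k L HC k d (general_lt k L HC)), orb_true_iff, !odir_eqb_eq.
    reflexivity. }
  rewrite <- !G. reflexivity.
Qed.

Lemma orientation k L : is_config k L ->
  split_dirs (bc L origin) = (prev_dir L k, next_dir L k) \/
  split_dirs (bc (rev L) origin) =
    (prev_dir (rev L) (length L - 1 - k), next_dir (rev L) (length L - 1 - k)).
Proof.
  intros HC. pose proof (general_lt k L HC).
  rewrite bc_rev, prev_dir_rev, next_dir_rev, (bc_general k L HC) by assumption.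
  apply split_dirs_pair. intros d E1 E2. exact (prev_next_dir_neq k L HC k d E1 E2).
Qed.

Lemma path_automaton_solution M : is_solution (path_automaton M).
Proof.
  intros k L HC. destruct (orientation k L HC) as [HM|HM].
  - exists (fire_time M (length L) k). exact (fires_oriented M k L HC HM).
  - exists (fire_time M (length (rev L)) (length L - 1 - k)). apply fires_rev.
    exact (fires_oriented M _ (rev L) (is_config_rev k L HC) HM).
Qed.

Lemma path_automaton_fires M k L : is_config k L -> length L <= M ->
  fires_at (path_automaton M) L (matched_time (length L) k).
Proof.
  intros HC HLM. pose proof (general_lt k L HC).
  destruct (orientation k L HC) as [HM|HM].
  - rewrite <- fire_time_matched with (M := M) by lia. exact (fires_oriented M k L HC HM).
  - apply fires_rev. rewrite <- matched_time_rev by lia.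
    pose proof (fires_oriented M _ (rev L) (is_config_rev k L HC) HM) as F.
    rewrite length_rev, fire_time_matched in F by lia. exact F.
Qed.

(** * The lower bound *)

Lemma node_segment_app L x0 x1 a b j : a + j <= b < length L ->
  node (x0 ++ segment L a b ++ x1) (length x0 + j) = node L (a + j).
Proof.
  intros H. unfold node. rewrite app_nth2 by lia. replace (length x0 + j - length x0) with j by lia.
  unfold segment. rewrite app_nth1 by (rewrite length_firstn, length_skipn; lia).
  rewrite nth_firstn. replace (j <? S b - a) with true by (symmetry; b2p; lia).
  rewrite nth_skipn. reflexivity.
Qed.

(* The configuration [x0 p_(r+1) ... p_s x1] of [W(r+1, s)]. *)
Definition extend (L x0 x1 : list pos) : list pos := x0 ++ segment L 1 (length L - 1) ++ x1.

Lemma extend_node L x0 x1 j : j < length L - 1 ->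
  node (extend L x0 x1) (length x0 + j) = node L (S j).
Proof. intros. apply node_segment_app. lia. Qed.

Lemma extend_length L x0 x1 : 1 <= length L ->
  length (extend L x0 x1) = length x0 + (length L - 1) + length x1.
Proof. intros. unfold extend, segment. rewrite !length_app, length_firstn, length_skipn. lia. Qed.

Section LowerBound.

Variable A : automaton.

Lemma quiet_outside_cone k L t i : is_config k L -> i < length L -> t < dist k i ->
  state A L t (node L i) = Qst A.
Proof.
  intros HC. revert i. induction t as [|t IH]; intros i Hi Ht.
  - rewrite state_0. unfold init.
    replace (pos_eqb (node L i) origin) with false; [reflexivity|].
    symmetry. apply not_true_iff_false. rewrite pos_eqb_eq, <- (node_general k L HC).
    intro E. apply (config_node_inj k L HC) in E; [unfold dist in Ht; lia|exact Hi|].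
    apply (general_lt k L HC).
  - rewrite state_S, IH by (unfold dist in *; lia).
    assert (G : forall d, nbr A L (state A L t) (padd (node L i) (dvec d)) = None \/
                          nbr A L (state A L t) (padd (node L i) (dvec d)) = Some (Qst A)).
    { intros d. unfold nbr. destruct (memb L _) eqn:E; [right|left; reflexivity].
      destruct (config_neighbour_index k L HC i d Hi E) as [[? ->]|[? ->]];
        rewrite IH by (unfold dist in *; lia); reflexivity. }
    apply Q_stable; [exact (G East)|exact (G North)|exact (G West)|exact (G South)].
Qed.

Section Extension.

Variables (k : nat) (L x0 x1 : list pos).
Hypothesis HC : is_config k L.
Hypothesis Hk : 1 <= k.
Hypothesis HW : W k L 1 (length L - 1) x0 x1.

Lemma extension_config : is_config (length x0 + (k - 1)) (extend L x0 x1).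
Proof. apply HW. Qed.

Lemma extension_bc l : 1 <= l <= length L - 1 -> bc (extend L x0 x1) (node L l) = bc L (node L l).
Proof. apply HW. Qed.

Lemma extension_memb l d : 1 <= l <= length L - 1 ->
  memb (extend L x0 x1) (padd (node L l) (dvec d)) = memb L (padd (node L l) (dvec d)).
Proof.
  intros Hl. pose proof (extension_bc l Hl) as H. unfold bc in H. inversion H.
  destruct d; assumption.
Qed.

Lemma extension_outer_quiet t d : 2 <= length L -> t < k ->
  padd (node L 1) (dvec d) = node L 0 -> memb (extend L x0 x1) (node L 0) = true ->
  state A (extend L x0 x1) t (node L 0) = Qst A.
Proof.
  intros HL Ht Ed Hm. pose proof (general_lt k L HC). pose proof (extend_length L x0 x1 ltac:(lia)).
  apply memb_In, (config_In (extend L x0 x1)) in Hm. destruct Hm as [j [Hj Ej]].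
  assert (Ha : adj (node (extend L x0 x1) (length x0)) (node (extend L x0 x1) j)).
  { rewrite <- (Nat.add_0_r (length x0)), extend_node, Ej, <- Ed by lia.
    apply adj_dvec. eauto. }
  destruct (config_adj_index _ _ extension_config (length x0) j ltac:(lia) Hj Ha) as [->|Ej0].
  - destruct (Nat.le_gt_cases (length L) 2).
    + rewrite <- Ej. apply (quiet_outside_cone _ _ _ _ extension_config Hj). unfold dist. lia.
    + exfalso. rewrite <- Nat.add_1_r, extend_node in Ej by lia.
      apply (config_node_inj k L HC) in Ej; lia.
  - rewrite <- Ej. apply (quiet_outside_cone _ _ _ _ extension_config Hj). unfold dist. lia.
Qed.

Lemma extension_agree t l : 1 <= l <= length L - 1 -> t <= k + l - 1 ->
  state A L t (node L l) = state A (extend L x0 x1) t (node L l).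
Proof.
  pose proof (general_lt k L HC). revert l. induction t as [|t IH]; intros l Hl Ht.
  - rewrite !state_0. unfold init. rewrite <- (node_general k L HC), extension_bc by lia.
    reflexivity.
  - rewrite !state_S, IH by lia.
    assert (G : forall d, nbr A L (state A L t) (padd (node L l) (dvec d)) =
                nbr A (extend L x0 x1) (state A (extend L x0 x1) t) (padd (node L l) (dvec d))).
    { intros d. unfold nbr. rewrite extension_memb by exact Hl.
      destruct (memb L (padd (node L l) (dvec d))) eqn:Eb; [|reflexivity]. f_equal.
      destruct (config_neighbour_index k L HC l d ltac:(lia) Eb) as [[? Ep]|[? Ep]];
        rewrite Ep; [|apply IH; lia].
      destruct (Nat.eq_dec l 1) as [->|]; [|apply IH; lia].
      rewrite Nat.sub_diag in Ep |- *.
      rewrite (quiet_outside_cone k L) by (auto; unfold dist; lia).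
      symmetry. apply (extension_outer_quiet t d); [lia|lia|exact Ep|].
      rewrite <- Ep, extension_memb, Eb by lia. reflexivity. }
    exact (f_equal4 _ (G East) (G North) (G West) (G South)).
Qed.

End Extension.

Lemma fires_lower_bound k L t : is_config k L -> 1 <= k -> f_infinite k L 1 (length L - 1) ->
  is_solution A -> fires_at A L t -> k + (length L - 1) <= t.
Proof.
  intros HC Hk Hf Hsol [_ Hfire]. pose proof (general_lt k L HC).
  destruct (Nat.le_gt_cases (k + (length L - 1)) t) as [|Hlt]; [assumption|exfalso].
  destruct (Hf (t + 2)) as (x0 & x1 & HW & Hx0).
  pose proof (extension_config k L x0 x1 HW) as HC2.
  pose proof (extend_length L x0 x1 ltac:(lia)).
  destruct (Hsol _ _ HC2) as [t2 [Hsilent2 Hfire2]].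
  assert (Fs : Fire A (state A (extend L x0 x1) t (node L (length L - 1)))).
  { rewrite <- (extension_agree k L x0 x1 HC Hk HW) by lia. apply Hfire, nth_In. lia. }
  assert (Hin : In (node L (length L - 1)) (extend L x0 x1)).
  { replace (node L (length L - 1)) with (node L (S (length L - 2))) by (f_equal; lia).
    rewrite <- (extend_node L x0 x1) by lia. apply nth_In. lia. }
  destruct (Nat.lt_ge_cases t t2).
  - exact (Hsilent2 t ltac:(assumption) _ Hin Fs).
  - assert (F0 : Fire A (state A _ t2 (node _ 0))) by (apply Hfire2, nth_In; lia).
    rewrite (quiet_outside_cone _ _ t2 0 HC2) in F0 by (unfold dist; lia).
    exact (Q_not_fire A F0).
Qed.

End LowerBound.

Theorem theorem10 (k : nat) (L : list pos) :
  is_config k L -> type_II k L -> left_free k L ->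
  (s_of k L <= k)%nat ->
  mft_is k L (2 * k + s_of k L)%nat.
Proof.
  intros HC HII HL Hs. pose proof (general_lt k L HC). unfold s_of in *.
  assert (Hk : 1 <= k).
  { destruct (Nat.eq_dec k 0) as [->|]; [exfalso|lia].
    assert (right_free 0 L) by (left; unfold s_of; lia).
    destruct HII as [[_ HR]|[HL' _]]; contradiction. }
  assert (Hf : f_infinite k L 1 (length L - 1)) by (destruct HL as [|[_ Hf]]; [lia|exact Hf]).
  replace (2 * k + (length L - 1 - k)) with (matched_time (length L) k)
    by (unfold matched_time; lia).
  split.
  - exists (path_automaton (length L)).
    split; [apply path_automaton_solution|apply path_automaton_fires; auto].
  - intros A HA t Ht. pose proof (fires_lower_bound A k L t HC Hk Hf HA Ht).
    unfold matched_time. lia.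
Qed.
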